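(* Let $\mathbb{F}_{3^6}=\mathbb{F}_3(\xi)$ where $\xi$ is a root of $x^6-x^4+x^2-x-1\in\mathbb{F}_3[x]$, and let $\lambda=\xi^{91}$. Define $$f_1(x)=x^{270}-x^{246}+x^{90}-x^{82}-x^{54}+x^{30}-x^{10}-x^{2},$$ $$f_2(x)=\lambda^3\left(x^{270}-x^{246}-\lambda^2x^{90}+\lambda^2x^{82}-x^{54}+x^{30}+\lambda^2x^{10}+\lambda^2x^2\right),$$ and the commutative presemifields $P_i=(\mathbb{F}_{3^6},+,*_i)$, $i=1,2$, by $x*_i y=\tfrac12\big(f_i(x+y)-f_i(x)-f_i(y)\big)$. Then $P_1$ and $P_2$ are isotopic but not strongly isotopic; equivalently, $f_1$ and $f_2$ are planar functions that are not affine equivalent, while $x*_2y=(\lambda*_1x)*_1y$ for all $x,y$.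
   Context: A presemifield $(\mathbb{F}_{p^n},+,* )$ is an algebraic structure where $*$ is biadditive (distributive over $+$) and has no zero divisors. Two presemifields $(\mathbb{F}_{p^n},+,* )$ and $(\mathbb{F}_{p^n},+,\star)$ are isotopic if there exist linearized permutation polynomials $L,M,N\in\mathbb{F}_{p^n}[x]$ with $M(x)\star N(y)=L(x*y)$ for all $x,y$; they are strongly isotopic if such an isotopism exists with $M=N$. Two functions $f,g$ on $\mathbb{F}_{p^n}$ are affine equivalent if $g=l_1\circ f\circ l_2$ with $l_1,l_2$ affine permutations (an affine function being a constant plus a linearized polynomial). A function $f$ on $\mathbb{F}_{p^n}$, $p$ odd, is planar if $x\mapsto f(x+a)-f(x)$ is a bijection for every $a\neq0$. The polynomial $f_1$ is $x\mapsto x\star x$ for the Lunardon–Marino–Polverino–Trombetti–Bierbrauer semifield $(\mathbb{F}_{3^6},+,\star)$ with $q=3,m=3$, and $\lambda$ lies in its middle nucleus but not its nucleus. *)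

From HB Require Import structures.
From mathcomp Require Import all_boot all_order all_algebra all_field.
Set Implicit Arguments. Unset Strict Implicit. Unset Printing Implicit Defensive.
Import GRing.Theory.
Local Open Scope ring_scope.

Section Defs.
Variable F : finFieldType.

Definition linearized_fun (p : nat) (L : F -> F) : Prop :=
  exists a : seq F, forall x, L x = \sum_(i < size a) a`_i * x ^+ (p ^ i).

Definition linperm (p : nat) (L : F -> F) : Prop :=
  linearized_fun p L /\ bijective L.

Definition affine_perm (p : nat) (l : F -> F) : Prop :=
  (exists (c : F) (L : F -> F), linearized_fun p L /\ forall x, l x = c + L x)
  /\ bijective l.

Definition affine_equiv (p : nat) (f g : F -> F) : Prop :=
  exists l1 l2 : F -> F, affine_perm p l1 /\ affine_perm p l2 /\
    forall x, g x = l1 (f (l2 x)).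

Definition presemifield (mul : F -> F -> F) : Prop :=
  (forall x y z, mul (x + y) z = mul x z + mul y z) /\
  (forall x y z, mul x (y + z) = mul x y + mul x z) /\
  (forall x y, mul x y = 0 -> x = 0 \/ y = 0).

Definition isotopic (p : nat) (mul star : F -> F -> F) : Prop :=
  exists L M N : F -> F, [/\ linperm p L, linperm p M, linperm p N &
    forall x y, star (M x) (N y) = L (mul x y)].

Definition strongly_isotopic (p : nat) (mul star : F -> F -> F) : Prop :=
  exists L M : F -> F, [/\ linperm p L, linperm p M &
    forall x y, star (M x) (M y) = L (mul x y)].

Definition planar (f : F -> F) : Prop :=
  forall a : F, a != 0 -> bijective (fun x => f (x + a) - f x).

Definition psf_mul (f : F -> F) (x y : F) : F :=
  (f (x + y) - f x - f y) / 2%:R.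

Definition f1 (x : F) : F :=
  x ^+ 270 - x ^+ 246 + x ^+ 90 - x ^+ 82 - x ^+ 54 + x ^+ 30 - x ^+ 10 - x ^+ 2.

Definition f2 (lam x : F) : F :=
  lam ^+ 3 * (x ^+ 270 - x ^+ 246 - lam ^+ 2 * x ^+ 90 + lam ^+ 2 * x ^+ 82
              - x ^+ 54 + x ^+ 30 + lam ^+ 2 * x ^+ 10 + lam ^+ 2 * x ^+ 2).

End Defs.

From HB Require Import structures.
From mathcomp Require Import all_boot all_order all_algebra all_field.
From mathcomp Require Import ring.
Set Implicit Arguments. Unset Strict Implicit. Unset Printing Implicit Defensive.
Import GRing.Theory.
Local Open Scope ring_scope.

(* Everything reduces to finite computations in coordinates.  [phi] identifies six-tuples
   over F_3 with F through the basis 1, xi, ..., xi^5; it is injective because multiplication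
   by every nonzero tuple has trivial kernel, which certifies that x^6 - x^4 + x^2 - x - 1 is
   irreducible.
   Since f1 and f2 are Dembowski-Ostrom polynomials, *1 and *2 are biadditive, hence
   determined by their values on pairs of basis vectors.  These tables give
   x *2 y = (lam *1 x) *1 y, the absence of zero divisors, and the isotopism (x |-> c x, id, id)
   for the c with lam *1 (c x) = x.
   Non-strong isotopy uses two invariants of a functional a : F -> F_3 relative to a product
   B: the number of isotropic vectors of x |-> a (B x x), and whether a is twisted, i.e.
   a (B x (X y)) = b (B x y) for some functional b and some additive X with X^6 = X + 1.  For
   *2 some functional is twisted with 261 isotropic vectors.  An additive strong isotopism
   from *1 to *2, which a strong isotopism or an affine equivalence between f1 and f2 would
   provide, transports it to such a functional for *1.  Two autotopisms of *1 move every
   functional to one of eight representatives; for those with 261 isotropic vectors the Gram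
   matrix is invertible, which leaves 729 candidates for X, none of which satisfies
   X^6 = X + 1. *)

(** * Additive and biadditive maps *)

Section AdditiveFun.
Variables (U W : zmodType) (g : U -> W).
Hypothesis gD : {morph g : x y / x + y}.

Lemma addfun0 : g 0 = 0.
Proof. by apply: (@addrI _ (g 0)); rewrite -gD !addr0. Qed.

Lemma addfunN x : g (- x) = - g x.
Proof. by apply: (@addrI _ (g x)); rewrite -gD !subrr addfun0. Qed.

Lemma addfunB x y : g (x - y) = g x - g y.
Proof. by rewrite gD addfunN. Qed.

Lemma addfun_sum I r (P : pred I) (h : I -> U) :
  g (\sum_(i <- r | P i) h i) = \sum_(i <- r | P i) g (h i).
Proof. exact: (big_morph g gD addfun0). Qed.

Lemma addfun_inj : (forall x, g x = 0 -> x = 0) -> injective g.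
Proof.
by move=> g0 x y gxy; apply/eqP; rewrite -subr_eq0; apply/eqP/g0; rewrite addfunB gxy subrr.
Qed.

End AdditiveFun.

Lemma addfun_inv (U W : zmodType) (g : U -> W) (g' : W -> U) :
  {morph g : x y / x + y} -> cancel g g' -> cancel g' g -> {morph g' : x y / x + y}.
Proof. by move=> gD gK g'K x y; apply: (can_inj gK); rewrite gD !g'K. Qed.

Definition biadditive (U : zmodType) (m : U -> U -> U) :=
  (forall y, {morph m^~ y : x x' / x + x'}) /\ (forall x, {morph m x : y y' / y + y'}).

Section Presemifields.
Variable F : finFieldType.

Definition strongly_isotopic_add (mul star : F -> F -> F) := exists L M : F -> F,
  [/\ {morph L : x y / x + y}, {morph M : x y / x + y}, bijective M &
      forall x y, star x y = L (mul (M x) (M y))].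

Lemma presemifield_biadditive (m : F -> F -> F) : biadditive m ->
  (forall x y, m x y = 0 -> x = 0 \/ y = 0) -> presemifield m.
Proof.
move=> [mDl mDr] mzd.
by split; [move=> x y z; apply: mDl | split; [move=> x y z; apply: mDr | exact: mzd]].
Qed.

Lemma biadditive_eq_psf_mul (f g : F -> F) :
  f =1 g -> biadditive (psf_mul g) -> biadditive (psf_mul f).
Proof.
by move=> fg [gDl gDr]; split=> x y z; rewrite /psf_mul !fg -!/(psf_mul g _ _) ?gDl ?gDr.
Qed.

Lemma biadditive_psf_mulZ (c : F) f :
  biadditive (psf_mul f) -> biadditive (psf_mul (fun z => c * f z)).
Proof.
have psf_mulZ x y : psf_mul (fun z => c * f z) x y = c * psf_mul f x y.
  by rewrite /psf_mul -!mulrBr mulrA.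
by case=> fDl fDr; split=> x y z; rewrite !psf_mulZ ?fDl ?fDr mulrDr.
Qed.

Lemma planar_psf_mul (f : F -> F) : biadditive (psf_mul f) ->
  (forall x y, psf_mul f x y = 0 -> x = 0 \/ y = 0) -> planar f.
Proof.
move=> [fDl _] fzd a a0; apply: injF_bij => x y /= fxy.
have : psf_mul f (x - y) a = 0 by rewrite (addfunB (fDl a)) /psf_mul fxy subrr.
by case/fzd => [/eqP|/eqP]; rewrite ?subr_eq0 ?(negbTE a0) // => /eqP.
Qed.

Lemma linperm_id p : linperm p (@id F).
Proof. by split; [exists [:: 1] => x; rewrite big_ord1 mul1r expn0 expr1 | exists id]. Qed.

Lemma linperm_mulr p (c : F) : c != 0 -> linperm p ( *%R c).
Proof.
move=> c0; split; first by exists [:: c] => x; rewrite big_ord1 expn0 expr1.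
by exists ( *%R c^-1) => x /=; rewrite mulrA (mulVf, divff) ?mul1r.
Qed.

Section Frobenius.
Variable p : nat.
Hypothesis pcharFp : p \in [pchar F].

Lemma exprD_pchar_pow i : {morph (fun x : F => x ^+ (p ^ i)) : x y / x + y}.
Proof.
move=> x y; apply: exprDn_pchar.
by rewrite (eq_pnat _ (pcharf_eq pcharFp)) pnatX (pnat_id (pcharf_prime pcharFp)).
Qed.

Lemma linearized_fun_additive (L : F -> F) : linearized_fun p L -> {morph L : x y / x + y}.
Proof.
move=> [a La] x y; rewrite !La -big_split; apply: eq_bigr => i _.
by rewrite exprD_pchar_pow mulrDr.
Qed.

Lemma strongly_isotopic_addW (mul star : F -> F -> F) :
  strongly_isotopic p mul star -> strongly_isotopic_add mul star.
Proof.
move=> [L [M [[Llin _] [Mlin [M' MK M'K]] LM]]].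
have MD := linearized_fun_additive Mlin.
exists L, M'; split; first exact: linearized_fun_additive Llin.
- exact: addfun_inv MD MK M'K.
- exact: Bijective M'K MK.
by move=> x y; rewrite -LM !M'K.
Qed.

Definition do_poly (l : seq (F * nat * nat)) (x : F) : F :=
  \sum_(t <- l) t.1.1 * (x ^+ (p ^ t.1.2) * x ^+ (p ^ t.2)).

Lemma biadditive_psf_do_poly l : biadditive (psf_mul (do_poly l)).
Proof.
pose b x y := \sum_(t <- l) t.1.1 *
  (x ^+ (p ^ t.1.2) * y ^+ (p ^ t.2) + y ^+ (p ^ t.1.2) * x ^+ (p ^ t.2)).
have psfE x y : psf_mul (do_poly l) x y = b x y / 2%:R.
  congr (_ / _); rewrite /do_poly /b -!sumrB; apply: eq_bigr => t _.
  by rewrite !exprD_pchar_pow; ring.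
have bC x y : b x y = b y x by apply: eq_bigr => t _; rewrite addrC.
have bDl y : {morph b^~ y : x x' / x + x'}.
  move=> x x'; rewrite /b -big_split; apply: eq_bigr => t _ /=.
  by rewrite !exprD_pchar_pow; ring.
split=> [z x y | x y z]; rewrite !psfE; first by rewrite bDl mulrDl.
by rewrite bC bDl mulrDl ![b _ x]bC.
Qed.

End Frobenius.

Section CharThree.
Hypothesis pcharF3 : 3%N \in [pchar F].

Lemma psf_mul_pchar3 f (x y : F) : psf_mul f x y = f x + f y - f (x + y).
Proof.
have two : 2%:R = -1 :> F.
  by apply/eqP; rewrite -subr_eq0 opprK -(natrD F 2 1) (pcharf0 pcharF3).
by rewrite /psf_mul two invrN1 mulrN1; ring.
Qed.

Lemma affine_equiv_strongly_isotopic_add (f g : F -> F) :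
  biadditive (psf_mul f) -> f 0 = 0 -> g 0 = 0 ->
  affine_equiv 3 f g -> strongly_isotopic_add (psf_mul f) (psf_mul g).
Proof.
move=> [_ fDr] f0 g0 [l1 [l2 [[[c1 [L1 [L1lin l1E]]] _] [[[c2 [L2 [L2lin l2E]]] l2bij] gE]]]].
have L1D := linearized_fun_additive pcharF3 L1lin.
have L2D := linearized_fun_additive pcharF3 L2lin.
pose ell z := L1 (psf_mul f c2 (L2 z)).
have ellD : {morph ell : x y / x + y} by move=> x y; rewrite /ell L2D fDr L1D.
have gE' z : g z = L1 (f (L2 z)) - ell z.
  have fcE w : f (c2 + w) = f c2 + f w - psf_mul f c2 w by rewrite psf_mul_pchar3; ring.
  have c1E : c1 = - L1 (f c2).
    apply/eqP; rewrite -addr_eq0; apply/eqP.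
    by move: (gE 0); rewrite g0 l1E l2E (addfun0 L2D) addr0.
  by rewrite gE l1E l2E fcE (addfunB L1D) L1D c1E /ell; ring.
exists L1, L2; split=> //.
  case: l2bij => l2' l2K l2'K; exists (fun z => l2' (z + c2)).
    by move=> z; rewrite addrC -l2E l2K.
  by move=> w; apply: (@addrI _ c2); rewrite -l2E l2'K addrC.
move=> x y; rewrite !psf_mul_pchar3 !gE' L2D ellD.
by rewrite !(addfunB L1D) (L1D (f (L2 x))); ring.
Qed.

End CharThree.

End Presemifields.

(** * Coordinates over F_3 *)

Inductive trit := Z0 | Z1 | Z2.

Definition nat_of_trit t := match t with Z0 => 0%N | Z1 => 1%N | Z2 => 2%N end.
Definition trit_of_nat n := match n with 0%N => Z0 | 1%N => Z1 | _ => Z2 end.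
Lemma nat_of_tritK : cancel nat_of_trit trit_of_nat. Proof. by case. Qed.
Definition trit_eqb a b :=
  match a, b with Z0, Z0 | Z1, Z1 | Z2, Z2 => true | _, _ => false end.
Lemma trit_eqP : Equality.axiom trit_eqb. Proof. by do 2 case; constructor. Qed.
HB.instance Definition _ := hasDecEq.Build trit trit_eqP.
HB.instance Definition _ := CanHasChoice nat_of_tritK.

Definition tadd a b := match a, b with
  | Z0, x | x, Z0 => x | Z1, Z1 => Z2 | Z2, Z2 => Z1 | _, _ => Z0 end.
Definition topp a := match a with Z0 => Z0 | Z1 => Z2 | Z2 => Z1 end.
Definition tmul a b := match a with Z0 => Z0 | Z1 => b | Z2 => topp b end.

Lemma taddA : associative tadd. Proof. by do 3 case. Qed.
Lemma taddC : commutative tadd. Proof. by do 2 case. Qed.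
Lemma tadd0 : left_id Z0 tadd. Proof. by case. Qed.
Lemma taddN : left_inverse Z0 topp tadd. Proof. by case. Qed.
HB.instance Definition _ := GRing.isZmodule.Build trit taddA taddC tadd0 taddN.

Lemma tmulA : associative tmul. Proof. by do 3 case. Qed.
Lemma tmulC : commutative tmul. Proof. by do 2 case. Qed.
Lemma tmul1 : left_id Z1 tmul. Proof. by case. Qed.
Lemma tmulDl : left_distributive tmul tadd. Proof. by do 3 case. Qed.
Lemma trit1_neq0 : Z1 != Z0. Proof. by []. Qed.
HB.instance Definition _ :=
  GRing.Zmodule_isComNzRing.Build trit tmulA tmulC tmul1 tmulDl trit1_neq0.

Lemma trit_cases (t : trit) : [\/ t = 0, t = 1 | t = -1].
Proof. by case: t; [apply: Or31 | apply: Or32 | apply: Or33]. Qed.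

Record vec := Vec { c0 : trit; c1 : trit; c2 : trit; c3 : trit; c4 : trit; c5 : trit }.

Definition seq_of_vec v := [:: c0 v; c1 v; c2 v; c3 v; c4 v; c5 v].
Definition vec_of_seq s := Vec s`_0 s`_1 s`_2 s`_3 s`_4 s`_5.
Lemma seq_of_vecK : cancel seq_of_vec vec_of_seq. Proof. by case. Qed.
Definition vec_eqb u v := [&& c0 u == c0 v, c1 u == c1 v, c2 u == c2 v,
  c3 u == c3 v, c4 u == c4 v & c5 u == c5 v].
Lemma vec_eqP : Equality.axiom vec_eqb.
Proof.
move=> [a b c d e f] [a' b' c' d' e' f']; rewrite /vec_eqb /=.
apply: (iffP idP) => [|[<- <- <- <- <- <-]]; last by rewrite !eqxx.
by case/and5P=> /eqP-> /eqP-> /eqP-> /eqP-> /andP[/eqP-> /eqP->].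
Qed.
HB.instance Definition _ := hasDecEq.Build vec vec_eqP.
HB.instance Definition _ := CanHasChoice seq_of_vecK.

Definition vadd u v := Vec (tadd (c0 u) (c0 v)) (tadd (c1 u) (c1 v)) (tadd (c2 u) (c2 v))
  (tadd (c3 u) (c3 v)) (tadd (c4 u) (c4 v)) (tadd (c5 u) (c5 v)).
Definition vscale (t : trit) v :=
  Vec (tmul t (c0 v)) (tmul t (c1 v)) (tmul t (c2 v)) (tmul t (c3 v)) (tmul t (c4 v))
      (tmul t (c5 v)).
Definition vzero := Vec Z0 Z0 Z0 Z0 Z0 Z0.

Lemma vaddA : associative vadd.
Proof. by do 3 case=> ? ? ? ? ? ?; rewrite /vadd /= !taddA. Qed.
Lemma vaddC : commutative vadd.
Proof. by do 2 case=> ? ? ? ? ? ?; rewrite /vadd /=; congr Vec; apply: taddC. Qed.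
Lemma vadd0 : left_id vzero vadd.
Proof. by case. Qed.
Lemma vaddN : left_inverse vzero (vscale Z2) vadd.
Proof. by move=> [[] [] [] [] [] []]. Qed.
HB.instance Definition _ := GRing.isZmodule.Build vec vaddA vaddC vadd0 vaddN.

Lemma vscaleA a b v : vscale a (vscale b v) = vscale (a * b) v.
Proof. by case: v => *; rewrite /vscale /=; congr Vec; apply: mulrA. Qed.
Lemma vscale1 : left_id 1 vscale.
Proof. by case. Qed.
Lemma vscaleDr : right_distributive vscale +%R.
Proof.
by move=> a [? ? ? ? ? ?] [? ? ? ? ? ?]; rewrite /vscale /vadd /=; congr Vec; apply: mulrDr.
Qed.
Lemma vscaleDl v : {morph vscale^~ v : a b / a + b}.
Proof. by move=> a b; case: v => *; rewrite /vscale /vadd /=; congr Vec; apply: mulrDl. Qed.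
HB.instance Definition _ :=
  GRing.Zmodule_isLmodule.Build trit vec vscaleA vscale1 vscaleDr vscaleDl.

Definition vcoord (v : vec) (k : nat) : trit :=
  match k with 0 => c0 v | 1 => c1 v | 2 => c2 v | 3 => c3 v | 4 => c4 v | _ => c5 v end.
Definition vec_of_fun (h : nat -> trit) := Vec (h 0%N) (h 1%N) (h 2%N) (h 3%N) (h 4%N) (h 5%N).
Definition basis (k : nat) : vec :=
  match k with 0 => Vec Z1 Z0 Z0 Z0 Z0 Z0 | 1 => Vec Z0 Z1 Z0 Z0 Z0 Z0
  | 2 => Vec Z0 Z0 Z1 Z0 Z0 Z0 | 3 => Vec Z0 Z0 Z0 Z1 Z0 Z0 | 4 => Vec Z0 Z0 Z0 Z0 Z1 Z0
  | _ => Vec Z0 Z0 Z0 Z0 Z0 Z1 end.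

(* Linear combinations [sum_k c_k w_k] and the standard pairing, spelled out with the raw
   operations because [vm_compute] runs much faster on them than through the structure
   projections; [combE] and [dotE] give the big-operator forms. *)
Definition comb (c : vec) (w : nat -> vec) : vec :=
  vadd (vadd (vadd (vadd (vadd (vscale (c0 c) (w 0)) (vscale (c1 c) (w 1)))
    (vscale (c2 c) (w 2))) (vscale (c3 c) (w 3))) (vscale (c4 c) (w 4))) (vscale (c5 c) (w 5)).
Definition dot (a z : vec) : trit :=
  tadd (tadd (tadd (tadd (tadd (tmul (c0 a) (c0 z)) (tmul (c1 a) (c1 z))) (tmul (c2 a) (c2 z)))
    (tmul (c3 a) (c3 z))) (tmul (c4 a) (c4 z))) (tmul (c5 a) (c5 z)).

Lemma vcoordD u v k : vcoord (u + v) k = vcoord u k + vcoord v k.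
Proof. by do 5 case: k => [|k] //. Qed.
Lemma vcoordZ t v k : vcoord (t *: v) k = t * vcoord v k.
Proof. by do 5 case: k => [|k] //. Qed.
Lemma vcoord_vec_of_fun h k : (k < 6)%N -> vcoord (vec_of_fun h) k = h k.
Proof. by case: k => [|[|[|[|[|[|k]]]]]]. Qed.

Lemma combE c w : comb c w = \sum_(k < 6) vcoord c k *: w k.
Proof. by rewrite !big_ord_recl big_ord0 addr0 !addrA. Qed.
Lemma dotE a z : dot a z = \sum_(k < 6) vcoord a k * vcoord z k.
Proof. by rewrite !big_ord_recl big_ord0 addr0 !addrA. Qed.

Lemma combDl w : {morph comb^~ w : c c' / c + c'}.
Proof.
by move=> c c'; rewrite !combE -big_split; apply: eq_bigr => k _; rewrite vcoordD scalerDl.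
Qed.
Lemma combDr c w w' : comb c (fun j => w j + w' j) = comb c w + comb c w'.
Proof. by rewrite !combE -big_split; apply: eq_bigr => k _; rewrite scalerDr. Qed.
Lemma eq_comb c w w' : (forall j, (j < 6)%N -> w j = w' j) -> comb c w = comb c w'.
Proof. by move=> eqw; rewrite !combE; apply: eq_bigr => k _; rewrite eqw. Qed.
Lemma comb_basisl i w : (i < 6)%N -> comb (basis i) w = w i.
Proof.
by case: i => [|[|[|[|[|[|i]]]]]] //= _;
  rewrite combE !big_ord_recl big_ord0 /= !scale1r !scale0r ?add0r ?addr0.
Qed.
Lemma comb_basis c : comb c basis = c.
Proof.
by case: c => [] [] [] [] [] [] [].
Qed.

Lemma dotDr a : {morph dot a : x y / x + y}.
Proof. by move=> x y; rewrite !dotE -big_split; apply: eq_bigr => k _; rewrite vcoordD mulrDr. Qed.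
Lemma dotC a z : dot a z = dot z a.
Proof. by rewrite !dotE; apply: eq_bigr => k _; rewrite mulrC. Qed.

Section AdditiveVec.
Variable g : vec -> vec.
Hypothesis gD : {morph g : x y / x + y}.

Lemma addfunZ t v : g (t *: v) = t *: g v.
Proof.
by case: (trit_cases t) => ->; rewrite ?scale0r ?scale1r ?scaleN1r ?addfun0 ?addfunN.
Qed.
Lemma addfun_comb c w : g (comb c w) = comb c (g \o w).
Proof. by rewrite !combE addfun_sum //; apply: eq_bigr => k _; rewrite addfunZ. Qed.
Lemma addfun_basisE v : g v = comb v (g \o basis).
Proof. by rewrite -addfun_comb comb_basis. Qed.

End AdditiveVec.

Lemma additive_eq_basis (g h : vec -> vec) :
  {morph g : x y / x + y} -> {morph h : x y / x + y} ->
  (forall j, (j < 6)%N -> g (basis j) = h (basis j)) -> g =1 h.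
Proof. by move=> gD hD gh v; rewrite (addfun_basisE gD) (addfun_basisE hD); apply: eq_comb. Qed.

Lemma dot_comb a c w : dot a (comb c w) = \sum_(k < 6) vcoord c k * dot a (w k).
Proof.
rewrite combE (addfun_sum (dotDr a)); apply: eq_bigr => k _.
by rewrite !dotE mulr_sumr; apply: eq_bigr => i _; rewrite vcoordZ mulrCA.
Qed.

Definition adjoint (L : vec -> vec) (a : vec) := vec_of_fun (fun k => dot a (L (basis k))).

Lemma dot_adjoint L a z : {morph L : x y / x + y} -> dot a (L z) = dot (adjoint L a) z.
Proof.
move=> LD; rewrite (addfun_basisE LD z) dot_comb dotC dotE.
by apply: eq_bigr => k _; rewrite vcoord_vec_of_fun.
Qed.

(* Six-by-six matrices are lists of rows acting on the right of row vectors. *)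
Definition mxapp (W : seq vec) (v : vec) := comb v (nth 0 W).

Lemma mxappD W : {morph mxapp W : x y / x + y}.
Proof. exact: combDl. Qed.

Lemma nth_iota6 (h : nat -> vec) j : (j < 6)%N -> nth 0 [seq h i | i <- iota 0 6] j = h j.
Proof. by move=> ltj; rewrite (nth_map 0%N) ?size_iota // nth_iota. Qed.

Definition trits := [:: Z0; Z1; Z2].
Definition enum_vec : seq vec := flatten [seq flatten [seq flatten [seq flatten [seq flatten
  [seq [seq Vec a b c d e f | f <- trits] | e <- trits] | d <- trits] | c <- trits]
  | b <- trits] | a <- trits].
Definition all_trit (P : pred trit) := [&& P Z0, P Z1 & P Z2].
Definition all_vec (P : pred vec) :=
  all_trit (fun a => all_trit (fun b => all_trit (fun c => all_trit (fun d =>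
  all_trit (fun e => all_trit (fun f => P (Vec a b c d e f))))))).
Definition all_basis_pairs (P : vec -> vec -> bool) :=
  all (fun i => all (fun j => P (basis i) (basis j)) (iota 0 6)) (iota 0 6).

Lemma all_tritP P : all_trit P -> forall t, P t.
Proof. by case/and3P=> ? ? ? []. Qed.
Lemma all_vecP P : all_vec P -> forall v, P v.
Proof.
move=> allP [a b c d e f].
by move: (all_tritP allP a) => /all_tritP /(_ b) /all_tritP /(_ c) /all_tritP /(_ d)
  /all_tritP /(_ e) /all_tritP /(_ f).
Qed.
Lemma all_basis_pairsP P : all_basis_pairs P ->
  forall i j, (i < 6)%N -> (j < 6)%N -> P (basis i) (basis j).
Proof. by move=> /allP PP i j lti ltj; apply: (allP (PP i _)); rewrite mem_iota. Qed.

Lemma mem_enum_vec v : v \in enum_vec.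
Proof. by apply: (all_vecP (P := mem enum_vec)); vm_compute. Qed.
Lemma enum_vec_uniq : uniq enum_vec. Proof. by vm_compute. Qed.
Lemma size_enum_vec : size enum_vec = 729%N. Proof. by vm_compute. Qed.

Lemma count_bij (g : vec -> vec) (P : pred vec) :
  bijective g -> count (preim g P) enum_vec = count P enum_vec.
Proof.
case=> g' gK g'K; rewrite -count_map; apply/permP/uniq_perm.
- by rewrite (map_inj_uniq (can_inj gK)) enum_vec_uniq.
- exact: enum_vec_uniq.
- by move=> x; rewrite mem_enum_vec -(g'K x) map_f ?mem_enum_vec.
Qed.

Lemma vec_inj_surj (g : vec -> vec) : injective g -> forall y, exists x, g x = y.
Proof.
move=> g_inj y; have g_uniq : uniq (map g enum_vec).
  by rewrite (map_inj_uniq g_inj) enum_vec_uniq.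
have [_ /(_ y)] :=
  uniq_min_size g_uniq (fun x _ => mem_enum_vec x) (eq_leq (esym (size_map g _))).
by rewrite mem_enum_vec => /mapP [x _ ->]; exists x.
Qed.

(** * Biadditive maps in coordinates *)

Lemma biadditive_eq_basis (B B' : vec -> vec -> vec) : biadditive B -> biadditive B' ->
  (forall i j, (i < 6)%N -> (j < 6)%N -> B (basis i) (basis j) = B' (basis i) (basis j)) ->
  forall u v, B u v = B' u v.
Proof.
move=> [BDl BDr] [B'Dl B'Dr] BB' u v.
apply: (additive_eq_basis (BDl v) (B'Dl v)) => i lti.
by apply: (additive_eq_basis (BDr _) (B'Dr _)) => j ltj; apply: BB'.
Qed.

Lemma biadditive_comp (B : vec -> vec -> vec) (A L : vec -> vec) : biadditive B ->
  {morph A : x y / x + y} -> {morph L : x y / x + y} ->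
  biadditive (fun u v => L (B (A u) (A v))).
Proof. by case=> BDl BDr AD LD; split=> [v x y | u x y] /=; rewrite AD ?BDl ?BDr LD. Qed.

Definition left_regular (B : vec -> vec -> vec) (u : vec) :=
  let R := [seq B u (basis j) | j <- iota 0 6] in
  all_vec (fun v => (comb v (nth 0 R) == 0) ==> (v == 0)).

Lemma left_regularP (B : vec -> vec -> vec) u : {morph B u : x y / x + y} ->
  left_regular B u -> forall v, B u v = 0 -> v = 0.
Proof.
move=> BD /all_vecP reg v; rewrite (addfun_basisE BD) => Bv0; apply/eqP.
apply: (implyP (reg v)); rewrite -Bv0; apply/eqP/eq_comb => j ltj.
by rewrite (nth_map 0%N) ?size_iota // nth_iota.
Qed.

Lemma regular_no_zero_divisors (B : vec -> vec -> vec) : biadditive B ->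
  all_vec (fun u => (u == 0) || left_regular B u) -> forall u v, B u v = 0 -> u = 0 \/ v = 0.
Proof.
move=> [_ BDr] /all_vecP reg u v; case/orP: (reg u) => [/eqP|/left_regularP]; first by left.
by move/(_ (BDr u) v) => v0 /v0; right.
Qed.

(* [vxi6] holds the reduction xi^6 = 1 + xi - xi^2 + xi^4, so that [vshift] is
   multiplication by xi in the basis 1, xi, ..., xi^5. *)
Definition vxi6 : vec := Vec Z1 Z1 Z2 Z0 Z1 Z0.
Definition vshift (v : vec) :=
  vadd (Vec Z0 (c0 v) (c1 v) (c2 v) (c3 v) (c4 v)) (vscale (c5 v) vxi6).

Definition vmul (u v : vec) := comb v (fun j => iter j vshift u).
Definition vpow (u : vec) (n : nat) := iter n (vmul u) (basis 0).

Lemma vmul_regular : all_vec (fun w => (w == 0) || left_regular vmul w).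
Proof. by vm_compute. Qed.

Definition vpoly (cs : seq (trit * vec * nat)) (v : vec) :=
  foldr (fun t acc => t.1.1 *: vmul t.1.2 (vpow v t.2) + acc) 0 cs.
Definition psfV (f : vec -> vec) (u v : vec) := f u + f v - f (u + v).

(* [bilin T] is the biadditive map with [bilin T (basis i) (basis j) = T`_i`_j]. *)
Definition bilin (T : seq (seq vec)) (u v : vec) :=
  comb v (fun j => comb u (fun i => nth 0 (nth [::] T i) j)).

Lemma biadditive_bilin T : biadditive (bilin T).
Proof.
split=> [v u u' | u v v']; last exact: combDl.
by rewrite /bilin -combDr; apply: eq_comb => j _; rewrite combDl.
Qed.

Definition mul1_table : seq (seq vec) := [::
  [:: Vec Z1 Z0 Z0 Z0 Z0 Z0; Vec Z0 Z1 Z0 Z0 Z0 Z0; Vec Z0 Z0 Z1 Z0 Z0 Z0; Vec Z0 Z0 Z0 Z1 Z0 Z0;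
      Vec Z0 Z0 Z0 Z0 Z1 Z0; Vec Z0 Z0 Z0 Z0 Z0 Z1];
  [:: Vec Z0 Z1 Z0 Z0 Z0 Z0; Vec Z1 Z2 Z0 Z2 Z1 Z2; Vec Z1 Z0 Z1 Z2 Z0 Z2; Vec Z0 Z1 Z2 Z1 Z1 Z1;
      Vec Z2 Z1 Z1 Z0 Z0 Z0; Vec Z1 Z1 Z2 Z1 Z0 Z2];
  [:: Vec Z0 Z0 Z1 Z0 Z0 Z0; Vec Z1 Z0 Z1 Z2 Z0 Z2; Vec Z1 Z1 Z0 Z0 Z0 Z2; Vec Z1 Z1 Z0 Z0 Z2 Z0;
      Vec Z1 Z2 Z1 Z2 Z0 Z0; Vec Z2 Z1 Z0 Z1 Z0 Z2];
  [:: Vec Z0 Z0 Z0 Z1 Z0 Z0; Vec Z0 Z1 Z2 Z1 Z1 Z1; Vec Z1 Z1 Z0 Z0 Z2 Z0; Vec Z0 Z1 Z1 Z0 Z0 Z0;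
      Vec Z2 Z1 Z0 Z0 Z1 Z0; Vec Z0 Z1 Z2 Z0 Z0 Z1];
  [:: Vec Z0 Z0 Z0 Z0 Z1 Z0; Vec Z2 Z1 Z1 Z0 Z0 Z0; Vec Z1 Z2 Z1 Z2 Z0 Z0; Vec Z2 Z1 Z0 Z0 Z1 Z0;
      Vec Z0 Z1 Z2 Z0 Z0 Z1; Vec Z2 Z1 Z0 Z1 Z2 Z2];
  [:: Vec Z0 Z0 Z0 Z0 Z0 Z1; Vec Z1 Z1 Z2 Z1 Z0 Z2; Vec Z2 Z1 Z0 Z1 Z0 Z2; Vec Z0 Z1 Z2 Z0 Z0 Z1;
      Vec Z2 Z1 Z0 Z1 Z2 Z2; Vec Z0 Z0 Z1 Z0 Z1 Z2]].

Definition lamV : vec := Vec Z2 Z2 Z1 Z2 Z0 Z2.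
Definition mul1V := bilin mul1_table.
Definition mul2V (u v : vec) := mul1V (mul1V lamV u) v.
Definition lam_invV := Vec Z1 Z2 Z1 Z2 Z0 Z2.

Definition f1V := vpoly [:: (1, basis 0, 270%N); (-1, basis 0, 246%N); (1, basis 0, 90%N);
  (-1, basis 0, 82%N); (-1, basis 0, 54%N); (1, basis 0, 30%N); (-1, basis 0, 10%N);
  (-1, basis 0, 2%N)].
Definition f2V := let l3 := vpow lamV 3 in let l5 := vpow lamV 5 in
  vpoly [:: (1, l3, 270%N); (-1, l3, 246%N); (-1, l5, 90%N); (1, l5, 82%N); (-1, l3, 54%N);
            (1, l3, 30%N); (1, l5, 10%N); (1, l5, 2%N)].

Lemma lamV_cert : lamV == vpow (basis 1) 91.
Proof. by vm_compute. Qed.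
Lemma mul1V_cert : all_basis_pairs (fun u v => psfV f1V u v == mul1V u v).
Proof. by vm_compute. Qed.
Lemma mul2V_cert : all_basis_pairs (fun u v => psfV f2V u v == mul2V u v).
Proof. by vm_compute. Qed.
Lemma mul1V_regular : all_vec (fun u => (u == 0) || left_regular mul1V u).
Proof. by vm_compute. Qed.
Lemma lam_invV_cert :
  all (fun i => mul1V lamV (vmul lam_invV (basis i)) == basis i) (iota 0 6).
Proof. by vm_compute. Qed.

Lemma biadditive_mul1V : biadditive mul1V.
Proof. exact: biadditive_bilin. Qed.

Lemma biadditive_mul2V : biadditive mul2V.
Proof.
split=> [v x y | u x y]; rewrite /mul2V; last exact: biadditive_mul1V.2.
by rewrite (biadditive_mul1V.2 lamV) biadditive_mul1V.1.
Qed.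

(** * An invariant of strong isotopy *)

Definition form (B : vec -> vec -> vec) (a x y : vec) := dot a (B x y).
Definition isotropic_count B a := count (fun x => form B a x x == 0) enum_vec.
Definition twist_poly (X : vec -> vec) (v : vec) := iter 6 X v - X v - v.
Definition twisted (B : vec -> vec -> vec) (a : vec) := exists b (X : vec -> vec),
  [/\ {morph X : x y / x + y}, forall v, twist_poly X v = 0 &
      forall x v, form B a x (X v) = form B b x v].

Section Transfer.
Variables (B B' : vec -> vec -> vec) (A L : vec -> vec).
Hypotheses (AD : {morph A : x y / x + y}) (LD : {morph L : x y / x + y}) (Abij : bijective A).
Hypothesis BB' : forall u v, B u v = L (B' (A u) (A v)).

Lemma form_transfer a x y : form B a x y = form B' (adjoint L a) (A x) (A y).
Proof. by rewrite /form BB' dot_adjoint. Qed.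

Lemma isotropic_count_transfer a : isotropic_count B' (adjoint L a) = isotropic_count B a.
Proof.
by rewrite /isotropic_count -(count_bij _ Abij); apply: eq_count => x; rewrite /= form_transfer.
Qed.

Lemma twisted_transfer a : twisted B a -> twisted B' (adjoint L a).
Proof.
case: Abij => A' AK A'K [b [X [XD Xroot Xform]]].
have A'D := addfun_inv AD AK A'K.
have iterE n v : iter n (A \o X \o A') v = A (iter n X (A' v)).
  by elim: n => [|n IHn] /=; rewrite ?A'K // IHn AK.
exists (adjoint L b), (A \o X \o A'); split.
- by move=> x y /=; rewrite A'D XD AD.
- move=> v; rewrite /twist_poly -[v]A'K iterE /= AK -!(addfunB AD).
  by rewrite -[_ - _ - _]/(twist_poly X (A' v)) Xroot (addfun0 AD).
by move=> x v /=; rewrite -(A'K x) -(A'K v) -!form_transfer AK Xform.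
Qed.

End Transfer.

Lemma eq_twist_poly X Y v : X =1 Y -> twist_poly X v = twist_poly Y v.
Proof. by move=> XY; rewrite /twist_poly (eq_iter XY) XY. Qed.

Definition gram_row B a w := vec_of_fun (fun i => form B a (basis i) w).
Definition gram B a := [seq gram_row B a (basis j) | j <- iota 0 6].

Lemma form_gram_row B a x w : (forall y, {morph B^~ y : x x' / x + x'}) ->
  form B a x w = dot x (gram_row B a w).
Proof.
move=> BDl; rewrite /form; have /= -> := addfun_basisE (BDl w) x.
by rewrite dot_comb dotE; apply: eq_bigr => k _; rewrite vcoord_vec_of_fun.
Qed.

Lemma twisted_gram B a b X : (forall y, {morph B^~ y : x x' / x + x'}) ->
  {morph X : x y / x + y} -> (forall v, twist_poly X v = 0) ->
  (forall v, gram_row B a (X v) = gram_row B b v) -> twisted B a.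
Proof. by move=> BDl XD Xroot XG; exists b, X; split=> // x v; rewrite !form_gram_row // XG. Qed.

(* Shows that [G := gram B a] is invertible, with inverse [H] found by search; a twist [X]
   must then send [v] to [H (gram_row B b v)] for some [b], and none of these 729 maps is a
   root of [twist_poly]. *)
Definition untwisted_cert B a :=
  let G := gram B a in
  let H := [seq nth 0 enum_vec (index (basis k) [seq mxapp G w | w <- enum_vec]) | k <- iota 0 6] in
  [&& all_vec (fun w => (mxapp G w == 0) ==> (w == 0)),
      all (fun k => mxapp G (nth 0 H k) == basis k) (iota 0 6) &
      all_vec (fun b => twist_poly (mxapp [seq mxapp H (gram_row B b (basis j)) | j <- iota 0 6])
                                   (basis 0) != 0)].

Lemma untwisted_certP B a : biadditive B -> untwisted_cert B a -> ~ twisted B a.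
Proof.
move=> [_ BDr] /and3P [/all_vecP Gker /allP GH /all_vecP Xcert] [b [X [XD Xroot Xform]]].
set G := gram B a in Gker GH; set H := [seq nth 0 _ _ | k <- _] in GH Xcert.
have rowD c : {morph gram_row B c : x y / x + y}.
  by move=> x y; rewrite /gram_row /vec_of_fun /form !BDr !dotDr.
have GE w : mxapp G w = gram_row B a w.
  by rewrite (addfun_basisE (rowD a)); apply: eq_comb => j ltj; rewrite nth_iota6.
have GHK c : mxapp G (mxapp H c) = c.
  rewrite {2}/mxapp (addfun_comb (mxappD G)) -[RHS]comb_basis.
  by apply: eq_comb => k ltk; apply/eqP/GH; rewrite mem_iota.
have G_inj : injective (mxapp G).
  by apply: addfun_inj (mxappD G) _ => w /eqP w0; apply/eqP/(implyP (Gker w)).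
have XE : X =1 mxapp [seq mxapp H (gram_row B b (basis j)) | j <- iota 0 6].
  apply: additive_eq_basis XD (mxappD _) _ => j ltj.
  rewrite /mxapp comb_basisl // nth_iota6 //; apply: G_inj; rewrite GHK GE.
  by rewrite /gram_row /vec_of_fun !Xform.
by move: (Xcert b); rewrite -(eq_twist_poly _ XE) Xroot eqxx.
Qed.

Lemma mxapp_cancel W W' : all (fun i => mxapp W' (mxapp W (basis i)) == basis i) (iota 0 6) ->
  cancel (mxapp W) (mxapp W').
Proof.
move=> /allP WW'; apply: (additive_eq_basis (g := mxapp W' \o mxapp W)) => [x y /=||j ltj].
- by rewrite !mxappD.
- by [].
- by apply/eqP/WW'; rewrite mem_iota.
Qed.

(* Two autotopisms (A, A, L) of [mul1V], given as (A, A^-1, L^-1). *)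
Definition autotopism (k : nat) : seq vec * seq vec * seq vec :=
  if k is 0 then
    ([:: Vec Z2 Z2 Z0 Z1 Z0 Z0; Vec Z0 Z2 Z2 Z0 Z1 Z0; Vec Z0 Z0 Z2 Z2 Z0 Z1; Vec Z1 Z1 Z2 Z2 Z0 Z0;
      Vec Z0 Z1 Z1 Z2 Z2 Z0; Vec Z0 Z0 Z1 Z1 Z2 Z2],
     [:: Vec Z1 Z0 Z1 Z2 Z2 Z1; Vec Z1 Z2 Z2 Z1 Z0 Z2; Vec Z2 Z0 Z0 Z2 Z0 Z0; Vec Z0 Z2 Z0 Z0 Z2 Z0;
      Vec Z0 Z0 Z2 Z0 Z0 Z2; Vec Z2 Z2 Z1 Z2 Z2 Z0],
     [:: Vec Z2 Z0 Z0 Z0 Z2 Z2; Vec Z2 Z2 Z0 Z2 Z1 Z2; Vec Z0 Z0 Z1 Z0 Z0 Z1; Vec Z2 Z2 Z1 Z1 Z2 Z2;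
      Vec Z2 Z2 Z1 Z1 Z0 Z0; Vec Z0 Z1 Z2 Z0 Z0 Z1])
  else
    ([:: Vec Z1 Z0 Z0 Z0 Z0 Z0; Vec Z0 Z0 Z0 Z1 Z0 Z0; Vec Z1 Z1 Z2 Z0 Z1 Z0; Vec Z0 Z1 Z1 Z0 Z1 Z0;
      Vec Z0 Z1 Z1 Z2 Z1 Z2; Vec Z1 Z2 Z2 Z1 Z0 Z2],
     [:: Vec Z1 Z0 Z0 Z0 Z0 Z0; Vec Z2 Z2 Z2 Z0 Z1 Z2; Vec Z2 Z0 Z1 Z2 Z0 Z0; Vec Z0 Z1 Z0 Z0 Z0 Z0;
      Vec Z2 Z1 Z0 Z2 Z2 Z1; Vec Z0 Z2 Z0 Z1 Z2 Z0],
     [:: Vec Z1 Z0 Z0 Z0 Z0 Z0; Vec Z2 Z2 Z2 Z0 Z1 Z2; Vec Z2 Z0 Z1 Z2 Z0 Z0; Vec Z0 Z1 Z0 Z0 Z0 Z0;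
      Vec Z2 Z1 Z0 Z2 Z2 Z1; Vec Z0 Z2 Z0 Z1 Z2 Z0]).

Definition autotopism_cert (t : seq vec * seq vec * seq vec) :=
  let: (A, A', L) := t in
  [&& all (fun i => mxapp A' (mxapp A (basis i)) == basis i) (iota 0 6),
      all (fun i => mxapp A (mxapp A' (basis i)) == basis i) (iota 0 6) &
      all_basis_pairs (fun u v => mul1V u v == mxapp L (mul1V (mxapp A u) (mxapp A v)))].

Lemma autotopism_certs k : autotopism_cert (autotopism k).
Proof. by case: k => [|k]; vm_compute. Qed.

Lemma autotopismP A A' L k : autotopism k = (A, A', L) ->
  [/\ cancel (mxapp A) (mxapp A'), cancel (mxapp A') (mxapp A) &
      forall u v, mul1V u v = mxapp L (mul1V (mxapp A u) (mxapp A v))].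
Proof.
move=> kE; move: (autotopism_certs k); rewrite kE => /and3P [AA' A'A mulA].
split; [exact: mxapp_cancel | exact: mxapp_cancel |].
apply: biadditive_eq_basis => [||i j lti ltj]; first exact: biadditive_mul1V.
- exact: biadditive_comp biadditive_mul1V (mxappD _) (mxappD _).
- exact/eqP/(all_basis_pairsP mulA).
Qed.

Definition act (k : nat) (a : vec) := adjoint (mxapp (autotopism k).2) a.
Definition act_word (w : seq nat) (a : vec) := foldl (fun a k => act k a) a w.

Lemma act_word_invariant w a : twisted mul1V a ->
  twisted mul1V (act_word w a) /\
  isotropic_count mul1V (act_word w a) = isotropic_count mul1V a.
Proof.
elim: w a => [|k w IHw] a tw //=.
case kE: (autotopism k) => [[A A'] L].
have [AK A'K mulA] := autotopismP kE.
have Abij : bijective (mxapp A) by exists (mxapp A').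
have -> : act k a = adjoint (mxapp L) a by rewrite /act kE.
have [tw' ->] := IHw _ (twisted_transfer (mxappD _) (mxappD _) Abij mulA tw).
by split=> //; apply: (isotropic_count_transfer (mxappD _) Abij mulA).
Qed.

Definition vec_index (v : vec) : nat :=
  nat_of_trit (c0 v) + 3 * (nat_of_trit (c1 v) + 3 * (nat_of_trit (c2 v) + 3 *
  (nat_of_trit (c3 v) + 3 * (nat_of_trit (c4 v) + 3 * nat_of_trit (c5 v))))).

Definition orbit_reps : seq vec :=
  [:: Vec Z0 Z0 Z0 Z0 Z0 Z0; Vec Z1 Z0 Z0 Z0 Z0 Z0; Vec Z0 Z1 Z0 Z0 Z0 Z0; Vec Z1 Z1 Z0 Z0 Z0 Z0;
      Vec Z2 Z1 Z0 Z0 Z0 Z0; Vec Z2 Z1 Z1 Z0 Z0 Z0; Vec Z0 Z1 Z0 Z1 Z0 Z0; Vec Z0 Z2 Z0 Z1 Z0 Z0].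

(* [orbit_words] lists, at position [vec_index a], a word moving [a] into [orbit_reps]. *)
Definition orbit_words : seq (seq nat) := [::
  [::]; [::]; [:: 1; 0; 1; 0; 1; 0; 1; 1; 1]; [::]; [::]; [::]; [:: 1; 1; 1];
  [:: 1; 1; 0; 1; 1; 0; 1; 1; 0]; [:: 1; 0; 1; 0; 1; 1; 1; 1; 0]; [:: 0; 1]; [:: 1; 1; 1];
  [:: 0; 1; 0; 1]; [:: 0; 0; 0; 0]; [:: 1; 1; 1]; [::]; [:: 0; 0; 0]; [:: 1; 0; 1; 0; 1; 0];
  [:: 0; 1; 1; 1; 1; 0; 1]; [:: 1; 1; 1; 0; 1]; [:: 0; 0; 1; 0; 0; 1; 0]; [:: 1; 0; 1; 0; 1; 0];
  [:: 1; 1; 0; 1]; [:: 1; 0; 0; 1; 1; 0; 0; 1; 1; 0]; [:: 1; 1; 1]; [:: 0; 1; 1; 0; 1]; [:: 0; 1];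
  [:: 0; 1; 0; 1; 0; 1]; [:: 0; 0; 1; 1]; [:: 0]; [:: 1; 0; 0; 1; 0; 0; 1]; [::]; [:: 0; 0; 1];
  [:: 1; 1; 0; 1; 1; 0]; [::]; [:: 1; 1; 0; 0; 1; 1; 0]; [:: 0; 1; 0; 0]; [:: 1; 0; 1; 0; 0];
  [:: 1; 0]; [:: 1; 0; 0; 1; 0; 0; 1]; [:: 1]; [:: 0; 0; 1; 0; 1]; [:: 0; 1; 0; 0];
  [:: 0; 0; 0; 0; 0]; [:: 1; 1; 1; 1; 0; 1]; [:: 0; 0; 0; 1; 0]; [:: 1; 0; 1; 0; 0];
  [:: 1; 0; 0; 1; 0; 0; 1; 1; 1]; [:: 0; 1; 0; 1; 1; 0]; [:: 0; 1; 1; 0; 1; 0]; [:: 1; 0; 1; 1];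
  [:: 0; 1; 0; 0; 1]; [:: 1; 1; 1; 1; 1]; [:: 0; 0; 1; 0; 1; 0; 1]; [:: 0; 1; 0; 0; 1; 1; 1; 1; 1];
  [:: 1; 0; 1; 0; 0]; [:: 0; 1; 0; 1; 1; 0]; [:: 1; 1; 0; 1; 0; 1; 0; 1; 1; 0]; [:: 0; 1; 0; 1; 0];
  [:: 1; 1; 0; 0; 1]; [:: 0; 1; 1; 1; 0; 1]; [:: 0; 1; 0; 1; 1; 1; 1; 0; 1];
  [:: 0; 1; 0; 1; 0; 0; 1; 1; 0]; [:: 0; 0; 0; 0; 0; 0; 1; 0]; [:: 0; 0; 1; 1];
  [:: 1; 0; 0; 1; 0; 0; 1]; [:: 0; 0; 1; 0; 1; 1; 1; 1]; [:: 0; 1; 1; 0; 1; 1; 0; 1];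
  [:: 0; 0; 0; 0; 0; 0]; [:: 0; 1; 1; 1]; [:: 1; 0; 0; 1; 1]; [:: 1; 1; 0; 0];
  [:: 0; 1; 0; 0; 1; 0; 1]; [:: 0; 0; 1; 1]; [:: 0; 0; 1; 0; 1; 1]; [:: 0; 0; 0; 0; 1; 0; 0];
  [:: 1; 0; 0; 1; 1; 1; 1; 1]; [:: 0; 0; 0; 0; 0; 0; 0; 1; 0; 0]; [:: 0; 1; 0; 1; 0; 1; 1; 0; 1];
  [:: 0; 0; 0; 0; 1; 0]; [:: 0; 0; 0; 0; 0; 0; 1]; [:: 1; 0; 0; 1; 0; 0]; [:: 1; 1; 0; 1; 1];
  [:: 0; 1; 1; 0]; [:: 0; 0; 1; 1; 0; 0; 1; 1; 0]; [:: 0; 1; 0; 1; 0; 0; 1; 1];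
  [:: 0; 0; 1; 0; 1; 0; 0]; [:: 0; 0; 0]; [:: 0; 1; 1; 0; 0; 1; 1; 0]; [:: 0; 0; 1; 0; 1; 0; 0];
  [:: 0; 1; 0; 1; 0]; [:: 0; 0; 1; 0; 0; 1; 0; 1]; [:: 0; 1; 0; 0; 1; 1; 0];
  [:: 1; 1; 0; 0; 1; 1; 0; 1; 1; 0]; [:: 1; 0; 1; 0; 1; 1; 1]; [:: 0; 0; 0; 1; 0; 0];
  [:: 0; 1; 0; 1; 0; 1; 1; 1]; [:: 0; 1; 0; 0; 1; 0; 1; 0; 1]; [:: 1; 0; 1; 0; 1; 1; 0];
  [:: 0; 0; 0; 0; 0; 0; 1; 0; 0]; [:: 0; 0]; [:: 0; 0; 0; 0; 0; 0; 0]; [:: 0; 0; 0; 0; 1];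
  [:: 0; 1; 1; 1; 0]; [:: 0; 1; 1; 1; 0; 1]; [:: 1; 0; 0; 1; 0; 0]; [:: 0; 1; 0; 0; 1; 0; 0];
  [:: 0; 0; 1; 1; 1]; [:: 0; 0; 0]; [:: 1; 0; 1; 1; 1; 0]; [:: 1; 1; 1; 1]; [:: 1; 0; 1; 1; 0];
  [:: 1; 0; 0; 1; 0; 0; 1; 0; 1]; [:: 1; 0; 1; 0; 1; 1; 1; 1]; [:: 1; 0; 1; 1; 1; 1; 1; 0];
  [:: 0; 1; 1]; [:: 0; 1; 0; 0; 1; 0; 1; 1; 1]; [:: 0; 0; 1; 0]; [:: 0; 1; 1; 1; 1; 1];
  [:: 1; 0; 1]; [:: 0; 1; 1; 0; 1; 0; 1]; [:: 0; 0; 0; 0; 0; 0; 0; 1; 0; 0];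
  [:: 0; 0; 0; 0; 0; 0; 0]; [:: 0; 0; 1; 0]; [:: 1; 0; 0]; [:: 0; 1; 1; 0; 0; 1];
  [:: 0; 0; 0; 0; 0]; [:: 0; 1; 0; 1; 0; 0; 1; 1; 0; 1]; [:: 1]; [:: 0; 0; 1; 1; 1; 1; 0];
  [:: 0; 1; 1]; [:: 0; 1; 0; 0; 1; 0]; [:: 0; 0; 0; 0; 0; 1]; [:: 0; 1; 0; 0; 1; 0; 0];
  [:: 1; 0; 1; 0; 1]; [:: 0; 0; 1; 1; 0; 1]; [:: 0; 1; 0; 1; 1; 1; 0; 1]; [:: 1; 0; 0; 1];
  [:: 0; 1; 0; 1; 0; 0]; [:: 1; 0; 1; 1; 1; 1; 1]; [:: 1; 1; 1; 0; 0; 1; 1; 0];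
  [:: 0; 0; 1; 0; 1; 0]; [:: 1; 0; 0; 1; 0; 1; 0]; [:: 1; 1; 1; 1; 0]; [:: 0; 0; 0; 0; 0; 0; 0; 1];
  [:: 1; 1; 0; 0]; [:: 1; 1; 0; 1]; [:: 0; 0; 1; 0; 0]; [:: 0; 0; 1; 0; 1; 0; 0; 1];
  [:: 1; 0; 0; 1; 0; 1]; [:: 1; 0; 0; 1; 1; 0]; [:: 0; 1; 1; 1; 1; 0]; [:: 0; 0; 0; 1];
  [:: 0; 0; 1; 0; 1; 0; 1]; [:: 0; 0; 0; 0; 0; 1; 0; 0]; [:: 0; 0; 0; 0; 1; 0; 0];
  [:: 1; 1; 1; 1; 1; 0]; [:: 0; 0; 1; 1; 0; 0; 1; 1; 0; 1]; [:: 0; 0; 0; 0; 0; 0; 0; 0];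
  [:: 0; 0; 0; 0; 0; 0; 0; 1]; [:: 0; 0; 1; 0; 1; 0; 0; 1]; [:: 1; 1; 0; 1];
  [:: 1; 0; 0; 1; 1; 0; 1; 1; 1]; [:: 0; 1; 1; 0; 0; 1; 1; 0]; [:: 0; 1; 1; 0; 1; 1];
  [:: 0; 0; 1; 0; 1; 0; 0]; [:: 1; 1; 0; 1; 1]; [:: 1; 1]; [:: 0; 1; 1; 0]; [:: 1; 1; 0; 1; 1];
  [:: 1; 0; 1; 0; 0; 1; 1; 1; 1; 0]; [:: 0; 1; 1; 0]; [:: 1; 0; 1; 0; 0; 1; 1; 1; 1];
  [:: 0; 0; 0; 0; 0; 0; 0; 0; 1; 0]; [:: 1; 0; 0; 1; 1; 0; 1; 1; 1; 0]; [:: 1; 0; 1; 0];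
  [:: 1; 0; 1; 0; 0; 1; 0; 1; 1; 1]; [:: 1; 0; 1; 0; 0; 1]; [:: 1; 0; 1; 0; 0; 1];
  [:: 0; 0; 1; 0; 1]; [:: 1; 0; 1; 0; 0; 1; 1]; [:: 0; 1; 0]; [:: 0; 0; 0]; [:: 1; 1; 0; 0; 1; 0];
  [:: 1; 0; 1; 1; 0; 1]; [:: 0; 0; 1; 0]; [:: 0; 0; 1; 1; 0; 0; 1; 1];
  [:: 0; 1; 0; 0; 1; 0; 0; 1; 1; 1]; [:: 1; 1; 1; 1; 1]; [:: 0; 0; 0; 0; 0; 0; 0; 0; 1];
  [:: 1; 1; 0; 1; 1; 1; 0]; [:: 1; 1; 0]; [:: 0; 0; 1; 1; 0]; [:: 1; 0; 1; 1]; [:: 0; 0; 1; 0; 0];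
  [:: 0; 1; 0; 1; 0; 1; 1; 0]; [:: 1; 1; 0; 1; 1; 0; 0; 1; 1; 0]; [:: 0; 1; 1];
  [:: 1; 0; 1; 1; 1; 0; 1]; [:: 0; 1; 0]; [:: 0; 1; 0; 1; 0; 1; 1; 1; 0]; [:: 1; 0];
  [:: 0; 1; 1; 0; 1]; [:: 0; 0; 0; 0; 0; 0]; [:: 0; 1; 0; 1; 0; 0; 1]; [:: 0; 1; 1; 0; 1; 1; 1];
  [:: 0; 0; 1; 0; 0]; [:: 1; 0; 0; 1; 0; 1; 1; 1; 1]; [:: 0; 1; 0; 0; 1];
  [:: 0; 0; 0; 0; 0; 0; 0; 1]; [:: 0; 1; 0; 1; 0; 0; 1]; [:: 0; 0; 1; 0; 1; 0; 1; 1; 0];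
  [:: 0; 1; 1; 1]; [:: 0; 0; 0; 0; 0; 0; 0; 1; 0]; [:: 0; 1; 1; 0; 1]; [:: 1; 1; 0; 0; 1];
  [:: 0; 1; 1; 0; 0; 1; 0]; [:: 0; 0; 1; 1; 0; 1; 1]; [:: 0; 1; 0; 0; 1; 0; 1; 0];
  [:: 0; 1; 1; 0; 1; 1; 0]; [:: 0; 0; 1; 0; 1; 0]; [:: 1; 0; 1; 1; 0]; [:: 1; 0; 1; 1; 1; 1];
  [:: 1; 0; 1; 0; 1; 1]; [:: 1; 0; 0; 1; 0; 1; 0; 1; 1; 1; 0]; [:: 1; 0; 0; 1; 0; 0; 1; 0; 1; 1; 1];
  [:: 1; 1; 0; 1; 1; 0; 1]; [:: 1; 0; 1; 0; 0; 1; 1; 0]; [:: 0; 0; 0; 0; 1; 0]; [:: 1; 0; 1; 0];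
  [:: 1; 0; 0; 1; 1]; [:: 0; 1; 0; 0; 1; 0; 0; 1]; [:: 1; 0; 0]; [:: 1; 0; 0]; [:: 1; 0; 1];
  [:: 1; 0; 1; 1; 0; 0; 1; 1; 0]; [:: 1; 0; 0; 1; 1; 1]; [:: 1]; [:: 0; 0; 0; 0; 0; 1];
  [:: 1; 0; 0; 1; 1; 1; 1; 1]; [:: 0; 0; 1; 0; 0; 1; 1]; [:: 0; 0; 0; 1; 0];
  [:: 0; 0; 0; 0; 0; 0; 1; 0; 0]; [:: 0; 0; 1; 0; 0; 1; 1; 1; 1; 1]; [:: 0; 0; 1; 0; 1; 1; 1; 1; 0];
  [:: 1; 1; 0; 0; 1; 1; 0; 0; 1; 1; 0]; [:: 0; 0; 0; 0; 0; 0; 1; 0; 0];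
  [:: 0; 1; 0; 0; 1; 0; 1; 1; 1; 0; 1]; [:: 0; 1; 0; 0; 1; 0]; [:: 0; 0; 1; 0; 0; 1];
  [:: 1; 1; 0; 0; 1; 0; 1; 0; 1; 1; 0]; [:: 0; 1; 1; 0; 0]; [:: 0; 0; 1; 1; 0; 1]; [:: 0; 0; 0; 0];
  [:: 1]; [:: 0; 0; 1; 0; 0; 1]; [:: 0; 1; 1; 0; 1; 0; 1]; [:: 0; 1; 1; 0; 0]; [:: 0; 0; 1; 1; 0];
  [:: 0; 1; 0; 0; 1; 0; 0; 1]; [:: 1; 1; 1; 1; 0; 1]; [:: 1; 0; 0; 1; 0; 0; 1; 1]; [:: 1; 0; 0];
  [:: 0; 1; 1; 0; 1; 1; 0]; [:: 0; 1; 0; 1; 1]; [:: 0; 0; 0; 0]; [:: 1; 0; 1; 0; 1];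
  [:: 0; 1; 1; 0; 1; 1; 0; 0; 1; 1; 0]; [:: 0; 0; 1; 0; 1; 0]; [:: 1; 1; 0; 0; 1; 0; 1];
  [:: 0; 1; 1; 0; 0]; [:: 0; 1; 0; 0; 1; 0; 1]; [:: 0; 1; 1; 0; 0; 1; 0]; [:: 0; 0; 1; 0; 1; 0; 1];
  [:: 1; 0; 1; 1]; [:: 1; 1; 0]; [:: 0; 0; 0; 0; 0; 0]; [:: 1; 0; 0; 1; 0; 1; 0; 1; 1; 1];
  [:: 0; 0; 0; 0; 1; 0; 0]; [:: 1; 1; 0]; [:: 0; 0; 0; 0; 0; 0; 0; 0; 1; 0];
  [:: 0; 0; 0; 0; 0; 0; 0; 0]; [:: 0; 0; 0; 0; 0; 1; 0]; [:: 1; 1; 0; 1; 1; 1; 0];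
  [:: 0; 1; 0; 0; 1; 0; 1; 1]; [:: 0; 1; 0; 1; 0; 1; 0; 1]; [:: 0; 1; 0; 1; 1; 1];
  [:: 1; 1; 0; 1; 1; 1]; [:: 0; 0; 1; 0; 0]; [:: 0; 1; 0]; [:: 1; 0]; [:: 1; 1; 0; 0; 1];
  [:: 1; 1; 0; 0]; [:: 1; 0; 0; 1]; [:: 0; 0; 1; 0; 1; 0]; [:: 0; 1; 0; 1; 0; 0; 1; 0; 1];
  [:: 1; 0; 0; 1; 1; 1; 1]; [:: 1; 1; 0; 1; 1; 1]; [:: 1; 0; 0; 1; 0; 1; 0; 1; 1; 0];
  [:: 1; 1; 1; 0; 1; 1; 0]; [:: 0; 1; 0; 1; 0]; [:: 0; 0]; [:: 0; 0; 1; 0; 1; 0; 0; 1; 1; 1];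
  [:: 1; 0; 1; 0; 0; 1; 0]; [:: 0; 0; 1; 1; 1]; [:: 0; 0; 1; 0; 1; 0; 1; 1; 1; 0];
  [:: 1; 0; 0; 1; 0; 0; 1; 1]; [:: 0; 0; 0; 0; 0; 1; 0; 0]; [:: 1; 1; 0; 0; 1; 0]; [:: 1; 1; 0; 1];
  [:: 1; 0; 1; 0]; [:: 0; 0]; [:: 0; 0; 0; 0; 0; 0; 0; 0; 1; 0]; [:: 0; 0; 1; 0; 0; 1; 0];
  [:: 0; 0; 1]; [:: 0; 1; 0; 1; 1; 1; 1; 0]; [:: 0; 0; 0; 0; 0; 0; 0; 1; 0];
  [:: 0; 1; 1; 1; 1; 0; 0; 1; 1; 0]; [:: 1; 0; 1; 0; 0; 1; 1; 0; 1]; [:: 0; 0; 0; 0; 0; 0; 0; 1; 0];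
  [:: 0; 0; 0; 1; 0; 0]; [:: 1; 1; 0; 1; 0; 1]; [:: 0; 0; 0; 1]; [:: 1; 0; 0; 1; 0; 1; 1];
  [:: 1; 1; 0; 1]; [:: 1; 0; 1; 1; 1; 1; 1]; [:: 0; 0; 1; 0; 0; 1; 1; 1]; [:: 0; 1; 0; 1; 0; 0];
  [:: 1; 1; 0; 0]; [:: 1; 1; 0; 0; 1]; [:: 0; 0; 0; 0; 0; 0; 0; 0]; [:: 1; 0; 0; 1; 0; 1; 0];
  [:: 0; 1; 0; 1; 0; 0]; [:: 1; 0; 1; 0; 0; 1; 0; 1]; [:: 0; 0; 0; 0; 0; 1; 0; 0];
  [:: 0; 1; 1; 1; 1; 1]; [:: 1; 1; 1; 1; 0]; [:: 0; 1; 0; 0; 1; 1; 1; 1];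
  [:: 0; 0; 1; 0; 1; 1; 1; 0]; [:: 1; 0; 0; 1; 0; 1]; [:: 0; 0; 0; 0]; [:: 1; 1; 1; 1; 1; 0];
  [:: 0; 1; 0; 1; 0; 1; 1; 1; 0; 1]; [:: 0; 1; 1; 0]; [:: 0; 0; 0; 0; 0; 0];
  [:: 0; 0; 1; 1; 1; 1; 1; 0]; [:: 0; 1; 1; 1; 1; 0]; [:: 0]; [:: 1; 0; 0; 1]; [:: 0; 1; 1; 0];
  [:: 1; 1; 0; 0; 1; 0; 1]; [:: 0; 0; 0; 0; 1; 0; 0]; [:: 1; 0; 1; 0]; [:: 0; 1; 1; 0; 1; 1; 1; 0];
  [:: 1]; [:: 0; 0; 1; 0; 1; 0; 0; 1]; [:: 1; 0; 0; 1]; [:: 1; 0; 0; 1; 0; 0; 1; 1; 1; 1; 0];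
  [:: 1; 0; 0]; [:: 0; 0; 1; 1; 1; 1; 0]; [:: 0; 0; 1; 0; 0]; [:: 0; 1; 1; 1; 1; 1];
  [:: 1; 0; 1; 1; 1; 0; 1]; [:: 1; 0; 1; 0; 1]; [:: 0; 0; 1; 1; 0; 1; 1]; [:: 0; 0; 1; 0];
  [:: 1; 0; 1; 1; 1; 1]; [:: 0; 1; 0; 1; 0; 0; 1; 0]; [:: 0; 1; 1; 0; 0; 1; 1; 1];
  [:: 0; 0; 1; 0; 1; 1; 1; 0; 1]; [:: 1; 1; 0; 1; 0]; [:: 1; 0; 1; 1; 0]; [:: 0; 1; 0; 1; 0; 1; 1];
  [:: 0; 1; 1]; [:: 0; 0; 1; 0; 1; 1; 1; 0; 1]; [:: 0; 0; 1; 0; 0]; [:: 1; 0; 1; 0; 1];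
  [:: 0; 1; 0; 0; 1; 0; 1; 0; 1; 1; 1]; [:: 0; 1; 0; 0; 1; 0]; [:: 0; 1; 0; 0; 1; 0; 0];
  [:: 0; 0; 1; 0; 1; 1]; [:: 0; 0; 0; 1; 0; 0]; [:: 0; 1; 0; 1; 1; 1; 1; 1]; [:: 0; 0; 0; 0; 1];
  [:: 1; 0; 1; 0; 1; 1; 0]; [:: 0; 1; 1; 1; 1; 0; 1]; [:: 0; 1; 0; 1; 0]; [:: 0; 0; 0; 1; 0; 0];
  [:: 0; 1; 0; 1; 1]; [:: 0; 0; 1; 0]; [:: 0; 1; 0; 0; 1; 1; 0; 1; 1; 1];
  [:: 0; 1; 0; 0; 1; 0; 1; 1; 1; 0]; [:: 0; 0; 0]; [:: 1; 0; 1; 0; 0]; [:: 0; 1; 0; 1];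
  [:: 0; 0; 1; 0; 1]; [:: 1; 1; 0; 0; 1; 1; 0; 1]; [:: 0; 1; 1; 1; 0]; [:: 1; 0; 1; 1; 0; 1; 1; 0];
  [:: 0; 0; 1; 0; 0; 1; 1]; [:: 0; 0]; [:: 0; 1; 1; 0; 1; 1]; [:: 1; 0; 1; 0; 0]; [:: 0; 0];
  [:: 0; 0; 1; 0; 1; 1; 1; 1; 1]; [:: 1; 0; 1; 0; 0; 1]; [:: 1; 1; 0; 0; 1; 1]; [:: 0; 0; 1];
  [:: 0; 0; 1; 1; 0; 0; 1; 1; 1]; [:: 1; 0; 0; 1; 1]; [:: 0; 0; 1; 1; 1; 1]; [:: 1; 0; 0; 1; 0];
  [:: 0; 1; 0; 0]; [:: 0]; [:: 0; 1; 0; 1; 0; 0; 1; 1; 0]; [:: 0; 0; 1; 1];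
  [:: 0; 1; 0; 1; 0; 1; 0]; [:: 0; 0; 0; 0; 0; 0; 0; 1; 0; 0]; [:: 0; 1; 0; 0];
  [:: 1; 0; 0; 1; 0; 0]; [:: 1; 0; 0; 1; 1; 1; 1; 0]; [:: 0; 1; 0; 0; 1; 1; 1]; [:: 1; 0; 1];
  [:: 0; 0; 1; 1; 0; 0]; [:: 0; 0; 0; 0; 0; 0; 1]; [:: 1; 0; 0; 1; 0; 1; 1; 1; 0];
  [:: 0; 0; 1; 1; 0; 0]; [:: 0; 1; 0; 1; 1; 1; 0]; [:: 1; 0; 1; 0; 1; 0; 1; 1; 1; 0];
  [:: 1; 0; 0; 1; 0]; [:: 1; 0; 0; 1; 1; 1; 1; 1]; [:: 1; 0]; [:: 0; 0; 1; 1; 0; 1; 1; 1; 0];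
  [:: 0; 0; 1; 1; 1; 1; 1]; [:: 0; 1; 0; 0; 1; 0; 0; 1; 1]; [:: 1; 0; 1; 0; 0; 1; 1];
  [:: 1; 0; 0; 1; 1; 1; 1; 1]; [:: 0; 1; 0; 1; 1; 0; 1; 1; 1]; [:: 0; 0; 1]; [:: 0; 1; 0; 1; 0];
  [:: 1; 1; 0; 0; 1; 1]; [:: 0; 1; 0; 1; 0; 1; 0]; [:: 1; 0; 1; 0; 1; 1; 1; 0]; [:: 1; 1; 0; 0; 1];
  [:: 1; 0; 0; 1; 0; 1; 1; 1; 0]; [:: 0; 1; 0; 1; 0; 1]; [:: 1; 0; 0; 1; 0; 1; 1; 1; 0; 1];
  [:: 0; 1; 0; 0; 1; 0]; [:: 0; 1; 0; 1; 0; 1]; [:: 1; 1; 0; 0; 1; 1; 1];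
  [:: 1; 0; 0; 1; 0; 1; 0; 1]; [:: 0; 0; 1; 1; 1; 1; 1]; [:: 1; 1; 0; 0];
  [:: 0; 1; 0; 0; 1; 1; 1; 1; 0; 1]; [:: 1; 0; 1; 0; 1; 0; 1]; [:: 1; 0; 1; 1; 0; 1; 1; 1; 0];
  [:: 0]; [:: 1; 0; 0; 1; 1]; [:: 0; 0; 0; 0; 0; 0; 0; 1; 0; 0]; [:: 0; 0; 1; 0; 1]; [:: 0; 1; 0];
  [:: 0; 1; 0; 1; 1; 1; 1]; [:: 0; 1]; [:: 1; 1]; [:: 1; 1; 1; 0; 1]; [:: 0; 0; 1; 1; 0; 0; 1];
  [:: 0; 0; 1]; [:: 0; 1; 0; 1]; [:: 0; 0; 0; 0; 0; 0; 0; 0]; [:: 1; 1; 1; 1; 0; 1];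
  [:: 1; 0; 0; 1; 0; 1]; [:: 0; 1]; [:: 0; 0]; [:: 0; 0; 1; 0; 1; 0; 1; 1];
  [:: 0; 1; 1; 0; 0; 1; 0; 1]; [:: 1; 0]; [:: 1; 0; 0; 1; 0]; [:: 0; 0; 1; 1; 0; 0; 1; 1; 1];
  [:: 1; 1; 1; 1]; [:: 1; 0; 0; 1; 0]; [:: 0; 0; 0; 0; 0; 1; 0]; [:: 0];
  [:: 0; 0; 1; 1; 0; 1; 1; 0]; [:: 0; 0; 1; 0; 0; 1; 0; 1; 1; 1]; [:: 0; 0; 1; 0];
  [:: 0; 0; 0; 1; 0; 0]; [:: 0; 0; 1; 0; 0; 1; 0]; [:: 0; 1; 1; 1; 1; 1]; [:: 0; 0; 1; 0];
  [:: 1; 0; 1; 1; 1; 1; 0; 1]; [:: 0; 0; 0; 0]; [:: 1; 0; 0]; [:: 0; 0; 1; 0; 0; 1];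
  [:: 1; 0; 1; 1; 1; 1; 0; 1]; [:: 0; 1; 1; 0; 0]; [:: 1; 0; 1]; [:: 0; 0; 0; 0; 0; 1];
  [:: 0; 0; 1; 0; 0; 1; 0; 1]; [:: 1; 1; 1; 1]; [:: 0; 1; 1]; [:: 0; 0; 1; 0; 0; 1];
  [:: 0; 1; 0; 0; 1; 1; 0; 1]; [:: 1; 0; 1; 0; 0; 1; 0; 1; 1; 1; 0]; [:: 1; 1; 1; 1; 0; 1; 1; 0];
  [:: 1; 0; 0; 1; 0; 0; 1; 0]; [:: 0; 1; 0; 1; 0; 0; 1; 0; 1; 1; 1]; [:: 0; 1; 1; 0; 0];
  [:: 0; 0; 0; 0; 1; 0]; [:: 1; 0; 1; 0; 1]; [:: 0; 0; 1; 0; 1; 1; 1];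
  [:: 1; 0; 0; 1; 1; 0; 1; 1; 0]; [:: 1; 0; 1; 1; 1; 0]; [:: 1; 0; 0; 1]; [:: 0; 0; 1; 0; 0; 1];
  [:: 1; 0; 1; 1; 1; 1; 0]; [:: 1; 1]; [:: 1; 0; 1; 0; 1; 0; 0; 1; 1; 0]; [:: 1; 0; 1; 0; 0; 1];
  [:: 0; 1; 0; 1; 1; 0; 1]; [:: 0; 1; 1; 1; 1; 1; 0]; [:: 1; 0; 1; 0; 0; 1; 1; 1; 1];
  [:: 1; 1; 0; 1]; [:: 0; 1; 1; 0; 1; 1; 1]; [:: 0; 0; 0; 1]; [:: 0; 0; 1; 1; 1; 1; 0; 1];
  [:: 0; 0; 0; 0; 0; 0; 0]; [:: 0; 0; 0; 0; 0; 0; 0; 1; 0]; [:: 0; 1; 0; 1; 0; 0; 1];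
  [:: 0; 0; 1; 1; 0; 0; 1; 1]; [:: 0; 0; 0; 1]; [:: 0; 0; 1; 1; 0; 0; 1; 1; 0];
  [:: 0; 0; 0; 0; 0; 0; 0; 0; 1]; [:: 0; 1; 0]; [:: 1; 0; 1; 0; 0; 1; 0]; [:: 0; 1; 0; 0; 1; 1; 0];
  [:: 0; 1; 0; 1]; [:: 1; 1; 1; 1; 1]; [:: 0; 0; 0; 0; 0; 0; 1; 0]; [:: 0; 1; 0; 0; 1; 0; 0];
  [:: 0; 0; 0; 0; 1]; [:: 1; 0; 1; 0; 1; 1; 1; 0; 1]; [:: 1; 0; 1; 1]; [:: 0; 1];
  [:: 1; 0; 0; 1; 0; 1]; [:: 1; 0; 1; 1; 1; 1; 1]; [:: 0; 1; 0; 1; 0; 0]; [:: 1; 0]; [:: 0; 1; 0];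
  [:: 1; 1; 1; 1; 0; 0; 1; 1; 0]; [:: 0; 1; 0; 1; 0; 0]; [:: 0; 0; 0; 0; 0; 1; 0; 0];
  [:: 1; 0; 0; 1; 1; 0]; [:: 1; 0; 0; 1]; [:: 1; 1; 0; 1; 0; 1]; [:: 0; 1; 0; 1; 0; 0; 1; 1; 1];
  [:: 0; 0; 1; 1; 0; 1; 1; 1]; [:: 0; 1; 0; 0; 1]; [:: 0]; [:: 0; 0; 1; 1; 0]; [:: 0; 0; 0; 0; 1];
  [:: 0; 1]; [:: 1; 0; 0; 1; 0; 1; 1; 1; 1]; [:: 0; 0; 1; 0; 0; 1; 0; 1; 1]; [:: 1; 1; 0];
  [:: 0; 1; 1; 0; 0; 1; 1; 0; 1]; [:: 0; 1; 0; 0; 1; 1; 1; 1]; [:: 1; 1; 1; 0; 1];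
  [:: 1; 0; 1; 1; 1]; [:: 0; 1; 0; 1; 1; 1; 0]; [:: 1; 0; 0; 1; 0; 1; 1; 1];
  [:: 0; 0; 0; 0; 0; 0; 1; 0]; [:: 0; 0; 0; 0; 0; 0; 1]; [:: 1; 1; 0; 1; 1; 0]; [:: 0; 0; 1];
  [:: 0; 1; 1; 0; 1; 0]; [:: 0; 0; 1; 1; 0; 0]; [:: 1; 1; 0; 0; 1; 1; 0]; [:: 0; 1; 0; 0];
  [:: 1; 0; 0; 1; 0]; [:: 0; 0; 1; 0; 1; 1; 1; 1]; [:: 0; 0; 0; 0; 0]; [:: 1; 0; 0; 1; 1; 1; 1; 0];
  [:: 0; 1; 0; 0; 1; 0; 1]; [:: 1; 1; 0; 0; 1; 1]; [:: 0; 0; 0; 1; 0]; [:: 0]; [:: 0; 1; 0; 0];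
  [:: 0; 0; 0; 1; 0]; [:: 1; 1; 1; 0]; [:: 1; 1; 0; 0; 1; 1]; [:: 1; 0; 0; 1; 0];
  [:: 0; 1; 0; 0; 1; 0]; [:: 0; 0; 0; 0; 0; 0; 1]; [:: 1; 1; 0; 1; 0; 0; 1; 1; 0];
  [:: 0; 0; 1; 0; 1]; [:: 0; 1; 1; 0; 0; 1]; [:: 0; 0; 0; 0; 0; 1; 0];
  [:: 0; 0; 1; 0; 0; 1; 1; 1; 1; 0]; [:: 1; 1; 1; 0; 0; 1]; [:: 1; 0; 0; 1; 1; 1; 1; 0; 1];
  [:: 0; 0; 1; 0; 0; 1; 0]; [:: 1; 1; 1; 1; 1]; [:: 1; 0; 0; 1; 0; 1]; [:: 0; 0; 1; 1; 0; 1; 1; 0];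
  [:: 1]; [:: 0; 1]; [:: 0; 0; 1; 1; 0; 0]; [:: 0; 0; 1; 1; 0; 0; 1]; [:: 0; 1; 0; 1];
  [:: 0; 0; 0; 0; 0; 0; 0; 0; 1]; [:: 1; 0; 0; 1]; [:: 0; 1; 0; 1; 1; 1; 1]; [:: 0; 1; 1; 1; 1];
  [:: 1; 0; 1]; [:: 0; 0; 0; 0; 0; 1; 0]; [:: 0; 0; 1; 1; 0; 0; 1]; [:: 1; 1; 0; 0; 1];
  [:: 1; 0; 1; 0; 1; 1; 0; 1]; [:: 0; 0; 1; 1; 0; 0]; [:: 1; 0; 0]; [:: 1; 0; 0; 1; 0; 1; 1];
  [:: 0; 1; 1; 1; 1]; [:: 1; 0; 1; 0; 0; 1; 1; 1]; [:: 0; 0; 1; 1; 1; 1]; [:: 1; 0; 1; 0; 1; 1];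
  [:: 1; 1]; [:: 1; 1; 1; 0]; [:: 1; 0; 0; 1; 1; 0; 1]; [:: 0; 0; 0; 0; 0];
  [:: 0; 0; 0; 0; 0; 0; 1; 0]; [:: 1; 0; 0; 1; 0; 0; 1; 1; 1; 1]; [:: 1; 0; 1; 0; 1; 1; 1; 0];
  [:: 1; 0; 1; 1; 1; 1; 1]; [:: 0; 1; 0; 0; 1]; [:: 0; 0; 1; 1; 0; 1]; [:: 1; 0; 0; 1; 0; 0];
  [:: 0; 0; 0; 1; 0]; [:: 1; 1; 1; 1]; [:: 0; 1; 0; 1; 0; 1; 0; 1; 1; 1];
  [:: 1; 0; 0; 1; 0; 0; 1; 1; 1; 1]; [:: 0; 0; 1; 1; 1; 1; 1]; [:: 0; 0; 1; 1; 1; 1; 0; 1];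
  [:: 0; 1; 0; 0; 1; 1]; [:: 1]; [:: 1; 0; 1; 1; 1]; [:: 0; 1; 0; 1; 1; 1; 0; 1]; [:: 1; 1; 1];
  [:: 1; 0; 1]; [:: 1; 1; 1; 0; 1; 0; 1; 1; 0]; [:: 1; 0; 0; 1; 0; 1; 1; 1; 1; 0]; [:: 1; 1; 0];
  [:: 0; 1; 1; 0; 0; 1; 1]; [:: 1; 0; 1; 1]; [:: 1; 1; 0; 1; 1]; [:: 1; 1; 0]; [:: 0; 1; 0; 0; 1];
  [:: 1; 0; 0; 1; 1; 1; 1; 0; 1]; [:: 0; 1; 0; 0; 1; 1]; [:: 0; 0; 1; 0; 1; 0; 0];
  [:: 1; 0; 0; 1; 1; 1; 1]; [:: 1; 0; 0; 1; 1; 1; 1; 1; 0]; [:: 0; 0; 1; 0; 1; 0; 0]; [:: 1; 0];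
  [:: 0; 0; 1; 0; 1; 1; 1; 0]; [:: 0; 0; 1; 0; 1; 0; 1; 1; 0]; [:: 0; 0; 1; 1; 0];
  [:: 0; 0; 1; 0; 1; 1; 1; 1; 0; 1]; [:: 0; 1; 0]; [:: 0; 1; 0; 1; 0; 1; 1; 0];
  [:: 0; 0; 1; 1; 0; 1; 1; 0; 1]; [:: 0; 0; 1; 0; 1; 0; 1; 1; 1; 0; 1]; [:: 0; 0; 0];
  [:: 1; 0; 1; 0; 1; 0; 1; 1; 0]; [:: 1; 1; 0; 0; 1; 1; 1]; [:: 0; 0; 1; 1; 0; 0; 1];
  [:: 0; 1; 1; 0; 0; 1; 1]; [:: 1; 0; 1; 0]; [:: 0; 1; 1; 0]; [:: 1; 0; 0; 1; 0; 0; 1];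
  [:: 0; 0; 1; 0; 1; 0; 1; 1; 0; 1]; [:: 0; 0; 0; 0; 0; 0; 0; 0; 1]; [:: 1; 1];
  [:: 0; 0; 1; 0; 0; 1; 1; 1; 1; 0; 1]; [:: 0; 1; 1; 0; 0; 1; 0; 1];
  [:: 0; 0; 0; 0; 0; 0; 0; 0; 1; 0]; [:: 1; 0; 1; 0; 0; 1]; [:: 0; 1; 1; 0; 0; 1];
  [:: 1; 1; 1; 1; 1]; [:: 0; 0; 0; 1]; [:: 0; 0; 1]; [:: 1; 0; 0; 1; 0; 1; 1; 1; 0; 1];
  [:: 1; 0; 1; 0; 1; 1; 1; 0; 1]; [:: 0; 0; 1; 1]; [:: 0; 0; 1; 0; 1; 0; 0; 1; 1];
  [:: 0; 0; 1; 0; 0; 1; 0; 1]; [:: 0; 0; 0; 0; 0; 0; 0]; [:: 1; 0; 0; 1; 0; 0; 1];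
  [:: 0; 0; 1; 0; 0; 1; 0]; [:: 0; 0; 1; 1; 1; 1; 1]; [:: 1; 0; 0; 1; 0; 0];
  [:: 1; 0; 1; 1; 1; 1; 0]; [:: 0; 0]; [:: 1; 1]; [:: 0; 1; 0; 0; 1; 0; 0]; [:: 0; 0; 0; 0; 1; 0];
  [:: 0; 0; 1; 0; 0; 1; 1; 1; 1]; [:: 0; 0; 0; 0; 0; 1]; [:: 0; 0; 0; 0; 0; 0; 0; 1];
  [:: 1; 0; 1; 0; 0; 1; 1; 0]; [:: 0; 1; 1; 0; 1]; [:: 1; 0; 1; 0; 1; 1; 1; 1]; [:: 0; 0; 1; 1; 0];
  [:: 0; 1; 0; 1; 0; 0; 1; 0]; [:: 1; 1; 1; 1]; [:: 0; 1; 0; 0; 1; 0; 1; 0];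
  [:: 0; 1; 0; 0; 1; 0; 0; 1]; [:: 1; 0; 1]; [:: 1; 0; 1; 1; 0; 1; 1; 1]; [:: 0; 0; 1; 0; 1; 0];
  [:: 0; 1; 1; 0; 0; 1]; [:: 1; 1; 0; 1; 0; 1; 1; 0]; [:: 0; 0; 1; 0; 1; 0; 1; 1; 1];
  [:: 1; 0; 0; 1; 0; 0; 1; 0]; [:: 0; 0; 1; 1; 0; 1; 1; 1]; [:: 1; 1; 0; 1; 0];
  [:: 0; 1; 1; 0; 0; 1; 1; 1]; [:: 0; 0; 1; 0; 0; 1; 1; 1; 1]; [:: 1; 0; 0; 1; 1; 1];
  [:: 0; 1; 0; 0; 1; 1; 1; 1; 0]; [:: 0; 0; 0; 0; 0; 0; 1; 0; 0]].

Definition orbit_word (a : vec) := nth [::] orbit_words (vec_index a).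

Lemma orbit_words_reach : all_vec (fun a => act_word (orbit_word a) a \in orbit_reps).
Proof. by vm_compute. Qed.

Lemma orbit_reps_untwisted :
  all (fun r => (isotropic_count mul1V r == 261%N) ==> untwisted_cert mul1V r) orbit_reps.
Proof. by vm_compute. Qed.

Definition twist_a : vec := Vec Z1 Z0 Z0 Z0 Z0 Z0.
Definition twist_b : vec := Vec Z0 Z2 Z0 Z0 Z0 Z0.
Definition twist_mx : seq vec :=
  [:: Vec Z0 Z2 Z1 Z2 Z1 Z0; Vec Z2 Z1 Z2 Z1 Z0 Z1; Vec Z0 Z2 Z1 Z2 Z2 Z2; Vec Z0 Z0 Z0 Z1 Z1 Z0;
      Vec Z0 Z1 Z2 Z0 Z0 Z2; Vec Z0 Z0 Z1 Z2 Z2 Z0].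

Lemma mul2V_twisted_cert :
  [&& all_vec (fun v => twist_poly (mxapp twist_mx) v == 0),
      all_vec (fun v => gram_row mul2V twist_a (mxapp twist_mx v) == gram_row mul2V twist_b v) &
      isotropic_count mul2V twist_a == 261%N].
Proof. by vm_compute. Qed.

Theorem mul2V_not_strongly_isotopic_add :
  ~ exists A L : vec -> vec, [/\ {morph A : x y / x + y}, {morph L : x y / x + y},
      bijective A & forall u v, mul2V u v = L (mul1V (A u) (A v))].
Proof.
case=> A [L] [AD LD Abij mulAL].
have /and3P [/all_vecP X_root /all_vecP X_gram /eqP count2] := mul2V_twisted_cert.
have tw2 : twisted mul2V twist_a := twisted_gram biadditive_mul2V.1 (mxappD _)
  (fun v => eqP (X_root v)) (fun v => eqP (X_gram v)).
set a := adjoint L twist_a.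
have tw1 : twisted mul1V a := twisted_transfer AD LD Abij mulAL tw2.
have count1 : isotropic_count mul1V a = 261%N by rewrite (isotropic_count_transfer LD Abij mulAL).
have [twr countr] := act_word_invariant (orbit_word a) tw1.
move: (allP orbit_reps_untwisted _ (all_vecP orbit_words_reach a)).
by rewrite countr count1 eqxx => /untwisted_certP; apply; first exact: biadditive_mul1V.
Qed.

(** * Back to the field *)

Section Model.
Variables (F : finFieldType) (xi : F).
Hypothesis pcharF3 : 3%N \in [pchar F].
Hypothesis xi_root : xi ^+ 6 - xi ^+ 4 + xi ^+ 2 - xi - 1 = 0.

Definition tritF (t : trit) : F := match t with Z0 => 0 | Z1 => 1 | Z2 => -1 end.

Lemma tritFD : {morph tritF : a b / a + b}.
Proof.
have two : 1 + 1 = -1 :> F.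
  by apply/eqP; rewrite -subr_eq0 opprK -!addrA -(natrD F 1 2) (pcharf0 pcharF3).
by do 2 case; rewrite /= ?addr0 ?add0r ?subrr ?addNr // -opprD two opprK.
Qed.
Lemma tritFM a b : tritF (a * b) = tritF a * tritF b.
Proof. by case: a; case: b; rewrite /= ?(mul0r, mulr0, mul1r, mulr1, mulrNN, oppr0). Qed.

Lemma addfun_tritF (g : F -> F) t x : {morph g : x y / x + y} -> g (tritF t * x) = tritF t * g x.
Proof. by move=> gD; case: t; rewrite /= ?mul0r ?mul1r ?addfun0 // !mulN1r addfunN. Qed.

Definition phi (v : vec) : F := \sum_(k < 6) tritF (vcoord v k) * xi ^+ k.

Lemma phiD : {morph phi : u v / u + v}.
Proof. by move=> u v; rewrite -big_split; apply: eq_bigr => k _; rewrite vcoordD tritFD mulrDl. Qed.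
Lemma phiZ t v : phi (t *: v) = tritF t * phi v.
Proof. by rewrite mulr_sumr; apply: eq_bigr => k _; rewrite vcoordZ tritFM mulrA. Qed.
Lemma phi_comb c w : phi (comb c w) = \sum_(k < 6) tritF (vcoord c k) * phi (w k).
Proof. by rewrite combE (addfun_sum phiD); apply: eq_bigr => k _; rewrite phiZ. Qed.
Lemma phi_basis k : (k < 6)%N -> phi (basis k) = xi ^+ k.
Proof.
by rewrite /phi; case: k => [|[|[|[|[|[|k]]]]]] // _;
  rewrite !big_ord_recl big_ord0 /= ?mul0r ?mul1r ?add0r ?addr0.
Qed.

Lemma phi_vshift v : phi (vshift v) = phi v * xi.
Proof.
rewrite phiD phiZ /phi !big_ord_recr big_ord0 /= add0r.
have xi6 : xi ^+ 6 = 1 + xi - xi ^+ 2 + xi ^+ 4 by rewrite -[LHS]subr0 -xi_root; ring.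
rewrite !big_ord0 !add0r -[RHS]subr0 -(subrr (tritF (c5 v) * xi ^+ 6)) {2}xi6 /=.
ring.
Qed.

Lemma phi_vmul u v : phi (vmul u v) = phi u * phi v.
Proof.
have shiftE j : phi (iter j vshift u) = phi u * xi ^+ j.
  by elim: j => [|j IHj]; rewrite ?mulr1 //= phi_vshift IHj exprSr mulrA.
rewrite phi_comb mulr_sumr; apply: eq_bigr => k _.
by rewrite shiftE mulrCA.
Qed.

Lemma phi_vpow u n : phi (vpow u n) = phi u ^+ n.
Proof.
elim: n => [|n IHn]; first by rewrite phi_basis.
by rewrite /vpow iterS -/(vpow u n) phi_vmul IHn exprS.
Qed.

Lemma phi_vpoly cs v :
  phi (vpoly cs v) = \sum_(t <- cs) tritF t.1.1 * (phi t.1.2 * phi v ^+ t.2).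
Proof.
elim: cs => [|t cs IHcs]; first by rewrite big_nil /vpoly /= (addfun0 phiD).
by rewrite big_cons /vpoly /= phiD phiZ phi_vmul phi_vpow -IHcs.
Qed.

(* [vec_inj_surj] turns regularity of multiplication by [w != 0] into an inverse of [w]. *)
Lemma phi_inj : injective phi.
Proof.
apply: addfun_inj phiD _ => w phiw0; apply/eqP; apply: contraT => w_neq0.
have mulwD : {morph vmul w : x y / x + y} by exact: combDl.
case/orP: (all_vecP vmul_regular w) => [w0|/(left_regularP mulwD) reg].
  by rewrite w0 in w_neq0.
have /vec_inj_surj /(_ (basis 0)) [v wv1] := addfun_inj mulwD reg.
move: (congr1 phi wv1); rewrite phi_vmul phiw0 mul0r phi_basis // => /eqP.
by rewrite eq_sym oner_eq0.
Qed.

Hypothesis cardF : #|F| = (3 ^ 6)%N.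

Lemma mem_phi_enum x : x \in map phi enum_vec.
Proof.
have phi_uniq : uniq (map phi enum_vec) by rewrite (map_inj_uniq phi_inj) enum_vec_uniq.
have /(subset_cardP _) -> // : map phi enum_vec \subset F by apply/subsetP.
by rewrite (card_uniqP phi_uniq) size_map size_enum_vec cardF.
Qed.

(* The inverse is kept opaque, so that unification never unfolds it into a search. *)
Lemma phi_inverse : {psi : F -> vec | cancel psi phi}.
Proof.
exists (fun x => nth 0 enum_vec (index x (map phi enum_vec))) => x.
rewrite -(nth_map _ 0) ?nth_index ?mem_phi_enum //.
by rewrite -(size_map phi) index_mem mem_phi_enum.
Qed.

Definition psi := sval phi_inverse.

Lemma psiK : cancel psi phi.
Proof. exact: svalP phi_inverse. Qed.
Lemma phiK : cancel phi psi.
Proof. by move=> v; apply: phi_inj; rewrite psiK. Qed.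
Lemma psiD : {morph psi : x y / x + y}.
Proof. exact: addfun_inv phiD phiK psiK. Qed.

Lemma additive_eq_xi (g h : F -> F) : {morph g : x y / x + y} -> {morph h : x y / x + y} ->
  (forall i, (i < 6)%N -> g (xi ^+ i) = h (xi ^+ i)) -> g =1 h.
Proof.
move=> gD hD gh x; rewrite -(psiK x) /phi !(addfun_sum gD, addfun_sum hD).
by apply: eq_bigr => i _; rewrite !addfun_tritF ?gh.
Qed.

Lemma phi_biadditive_eq (B : vec -> vec -> vec) (m : F -> F -> F) :
  biadditive B -> biadditive m ->
  (forall i j, (i < 6)%N -> (j < 6)%N -> phi (B (basis i) (basis j)) = m (xi ^+ i) (xi ^+ j)) ->
  forall u v, phi (B u v) = m (phi u) (phi v).
Proof.
move=> Bbi [mDl mDr] Bm u v; rewrite -[RHS]psiK; congr phi.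
have B'bi : biadditive (fun u v => psi (m (phi u) (phi v))).
  by split=> [w x y | w x y]; rewrite phiD ?mDl ?mDr psiD.
by apply: (biadditive_eq_basis Bbi B'bi) => i j lti ltj; rewrite /= !phi_basis // -Bm // phiK.
Qed.

Lemma phi_psfV fV f : (forall v, phi (fV v) = f (phi v)) ->
  forall u v, phi (psfV fV u v) = psf_mul f (phi u) (phi v).
Proof. by move=> fVf u v; rewrite psf_mul_pchar3 // (addfunB phiD) !phiD !fVf phiD. Qed.

Lemma phi_lamV : phi lamV = xi ^+ 91.
Proof. by rewrite (eqP lamV_cert) phi_vpow phi_basis. Qed.

Local Notation lam := (xi ^+ 91).
Local Notation mul1 := (psf_mul (@f1 F)).
Local Notation mul2 := (psf_mul (f2 lam)).

Lemma biadditive_mul1 : biadditive mul1.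
Proof.
apply: (biadditive_eq_psf_mul (g := do_poly 3 [:: (1, 5, 3); (-1, 5, 1); (1, 4, 2);
  (-1, 4, 0); (-1, 3, 3); (1, 3, 1); (-1, 2, 0); (-1, 0, 0)])).
  by move=> x; rewrite /f1 /do_poly !big_cons big_nil /= !mul1r !mulN1r addr0 -!exprD !addrA.
exact: biadditive_psf_do_poly.
Qed.

Lemma biadditive_mul2 : biadditive mul2.
Proof.
pose l := lam ^+ 2.
apply: (biadditive_eq_psf_mul (g := fun x => lam ^+ 3 * do_poly 3 [:: (1, 5, 3); (-1, 5, 1);
  (- l, 4, 2); (l, 4, 0); (-1, 3, 3); (1, 3, 1); (l, 2, 0); (l, 0, 0)] x)).
  by move=> x; rewrite /f2 /do_poly !big_cons big_nil /= !mul1r !mulN1r !mulNr addr0 -!exprD !addrA.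
exact: biadditive_psf_mulZ (biadditive_psf_do_poly pcharF3 _).
Qed.

Lemma phi_mul1V u v : phi (mul1V u v) = mul1 (phi u) (phi v).
Proof.
apply: phi_biadditive_eq biadditive_mul1V biadditive_mul1 _ u v => i j lti ltj.
have f1Vf w : phi (f1V w) = f1 (phi w).
  by rewrite phi_vpoly !big_cons big_nil !phi_basis //= /f1; ring.
by rewrite -(eqP (all_basis_pairsP mul1V_cert lti ltj)) (phi_psfV f1Vf) !phi_basis.
Qed.

Lemma phi_mul2V u v : phi (mul2V u v) = mul2 (phi u) (phi v).
Proof.
apply: phi_biadditive_eq biadditive_mul2V biadditive_mul2 _ u v => i j lti ltj.
have f2Vf w : phi (f2V w) = f2 lam (phi w).
  by rewrite phi_vpoly !big_cons big_nil !phi_vpow phi_lamV /= /f2; ring.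
by rewrite -(eqP (all_basis_pairsP mul2V_cert lti ltj)) (phi_psfV f2Vf) !phi_basis.
Qed.

Lemma mul2E x y : mul2 x y = mul1 (mul1 lam x) y.
Proof. by rewrite -(psiK x) -(psiK y) -phi_mul2V !phi_mul1V phi_lamV. Qed.

Lemma mul1_no_zero_divisors x y : mul1 x y = 0 -> x = 0 \/ y = 0.
Proof.
rewrite -(psiK x) -(psiK y) -phi_mul1V -(addfun0 phiD) => /phi_inj.
by case/(regular_no_zero_divisors biadditive_mul1V mul1V_regular) => ->; [left | right].
Qed.

Lemma mul2_no_zero_divisors x y : mul2 x y = 0 -> x = 0 \/ y = 0.
Proof.
have lam_neq0 : lam != 0.
  apply/expf_neq0/eqP => xi0; move: xi_root; rewrite xi0 !expr0n /= !subr0 add0r sub0r.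
  by move/eqP; rewrite oppr_eq0 oner_eq0.
rewrite mul2E => /mul1_no_zero_divisors [/mul1_no_zero_divisors [lam0|]|]; [|by left|by right].
by rewrite lam0 eqxx in lam_neq0.
Qed.

Lemma mul1_lam_inv x : mul1 lam (phi lam_invV * x) = x.
Proof.
apply: (additive_eq_xi (g := fun x => mul1 lam (phi lam_invV * x)) _ _ _ x)
  => [y z||i lti] /=.
- by rewrite mulrDr biadditive_mul1.2.
- by [].
rewrite -(phi_basis lti) -phi_vmul -phi_lamV -phi_mul1V.
by rewrite (eqP (allP lam_invV_cert i _)) ?mem_iota.
Qed.

Lemma lam_inv_neq0 : phi lam_invV != 0.
Proof.
apply/eqP => inv0; move: (mul1_lam_inv 1); rewrite inv0 mul0r.

by rewrite (addfun0 (biadditive_mul1.2 _)) => /eqP; rewrite eq_sym oner_eq0.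
Qed.

Lemma mul1_mul2_not_strongly_isotopic_add : ~ strongly_isotopic_add mul1 mul2.
Proof.
case=> L [M] [LD MD [M' MK M'K] mulLM]; apply: mul2V_not_strongly_isotopic_add.
pose A v := psi (M (phi v)); pose L' v := psi (L (phi v)).
exists A, L'; split.
- by move=> u v; rewrite /A phiD MD psiD.
- by move=> u v; rewrite /L' phiD LD psiD.
- by exists (fun v => psi (M' (phi v))) => v; rewrite /A psiK ?MK ?M'K phiK.
by move=> u v; apply: phi_inj; rewrite /L' /A psiK phi_mul1V !psiK -mulLM -phi_mul2V.
Qed.

End Model.

Theorem mainTheorem3 (F : finFieldType) (xi : F) :
  3%N \in [pchar F] -> #|F| = (3 ^ 6)%N ->
  xi ^+ 6 - xi ^+ 4 + xi ^+ 2 - xi - 1 = 0 ->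
  let lam := xi ^+ 91 in
  let mul1 := psf_mul (@f1 F) in
  let mul2 := psf_mul (f2 lam) in
  (presemifield mul1 /\ presemifield mul2) /\
  (isotopic 3 mul1 mul2 /\ ~ strongly_isotopic 3 mul1 mul2) /\
  (planar (@f1 F) /\ planar (f2 lam) /\ ~ affine_equiv 3 (@f1 F) (f2 lam)) /\
  (forall x y, mul2 x y = mul1 (mul1 lam x) y).
Proof.
move=> pcharF3 cardF xi_root lam mul1 mul2.
have bi1 : biadditive mul1 := biadditive_mul1 pcharF3.
have bi2 : biadditive mul2 := biadditive_mul2 xi pcharF3.
have zd1 := mul1_no_zero_divisors pcharF3 xi_root cardF.
have zd2 := mul2_no_zero_divisors pcharF3 xi_root cardF.
have not_add := mul1_mul2_not_strongly_isotopic_add pcharF3 xi_root cardF.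
split; first by split; apply: presemifield_biadditive.
split; [split | split; [split; [|split] |]].
- exists id, ( *%R (phi xi lam_invV)), id.
  split; [exact: linperm_id | exact: linperm_mulr (lam_inv_neq0 pcharF3 xi_root cardF) |
          exact: linperm_id |].
  by move=> x y; rewrite /mul2 mul2E ?mul1_lam_inv.
- by move/(strongly_isotopic_addW pcharF3).
- exact: planar_psf_mul.
- exact: planar_psf_mul.
- move/(affine_equiv_strongly_isotopic_add pcharF3 bi1) => iso_add.
  apply: not_add; apply: iso_add.
  + by rewrite /f1 !expr0n /= !(subr0, addr0).
  + by rewrite /f2 !expr0n /= !(mulr0, subr0, addr0).
- exact: mul2E.
Qed.
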